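(* For all terms $P,Q$ of $\mathcal{L}$: if $P\rightsquigarrow Q$ then $P\sim Q$. Consequently, for every term $P$, $P\sim\mathrm{nf}(P)$.
   Context: Calculus $\mathcal{L}$: names are constants ($a,b,c,d$) or name variables ($x,y,z$), $m,n$ range over names; process variables $X,Y,Z$. Terms: $P,Q::=0\mid X\mid m(X).P\mid \overline{m}(Q)\mid P|Q\mid \langle X\rangle P\mid P\langle Q\rangle\mid\langle x\rangle P\mid P\langle n\rangle$ with the usual binders, up to $\alpha$-conversion, well-typed, applications terminating. $\prod_{i=1}^kP_i=P_1|\cdots|P_k$. Structural congruence $\equiv$: smallest congruence with associativity and commutativity of $|$, $P|0\equiv P$, $(\langle X\rangle P)\langle Q\rangle\equiv P\{Q/X\}$, $(\langle x\rangle P)\langle m\rangle\equiv P\{m/x\}$. Transitions: $m(X).P\xrightarrow{m(X)}P$; $\overline{m}Q\xrightarrow{\overline{m}Q}0$; $P\xrightarrow{\lambda}P'$ implies $P|Q\xrightarrow{\lambda}P'|Q$; $P\xrightarrow{\overline{m}A}P'$, $Q\xrightarrow{m(X)}Q'$ imply $P|Q\xrightarrow{\tau}P'|Q'\{A/X\}$; symmetric versions; closure under $\equiv$. $\sim$ is strong bisimilarity (taken as strong HO-IO bisimilarity: the largest symmetric relation $\mathcal{R}$ such that $P\,\mathcal{R}\,Q$ implies: kinds (non-abstraction / $\langle Y\rangle A$ / $\langle y\rangle A$) agree with bodies related; each output $P\xrightarrow{\overline{a}A}P'$ is matched by $Q\xrightarrow{\overline{a}B}Q'$ with $A\,\mathcal{R}\,B$,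 $P'\,\mathcal{R}\,Q'$; each input $P\xrightarrow{a(X)}P'$ by $Q\xrightarrow{a(X)}Q'$ with $P'\,\mathcal{R}\,Q'$; $P\equiv X|P'$ by $Q\equiv X|Q'$, $P'\,\mathcal{R}\,Q'$; $P\equiv X\langle A\rangle|P'$ by $Q\equiv X\langle B\rangle|Q'$, $A\,\mathcal{R}\,B$, $P'\,\mathcal{R}\,Q'$; $P\equiv X\langle d\rangle|P'$ by $Q\equiv X\langle d\rangle|Q'$, $P'\,\mathcal{R}\,Q'$). Laws: DIS: $a(X).(P|\prod_{1}^{k-1}a(X).P)=\prod_1^ka(X).P$; APP1: $(\langle X\rangle P)\langle Q\rangle=P\{Q/X\}$; APP2: $(\langle x\rangle P)\langle m\rangle=P\{m/x\}$. $P\rightsquigarrow Q$ means there are $P'\equiv P$, $Q'\equiv Q$ such that $Q'$ is obtained from $P'$ by rewriting one subterm with DIS, APP1 or APP2 from left to right. $P$ is in normal form if no $Q$ with $P\rightsquigarrow Q$ exists; $\mathrm{nf}(P)$ is the (unique up to $\equiv$) normal form reached from $P$. *)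

(* The calculus L, in de Bruijn representation (two sorts of
   variables: name variables x,y,z and process variables X,Y,Z), so that
   terms are automatically identified up to alpha-conversion. *)
From Stdlib Require Import List Relations.
Import ListNotations.

(* names: constants a,b,c,d (NC c) or name variables x,y,z (NV i, de Bruijn) *)
Inductive name : Type :=
| NC (c : nat)
| NV (i : nat).

Inductive term : Type :=
| Nil
| PVar (i : nat)
| Inp (m : name) (P : term)        (* m(X).P, binds process variable 0 in P *)
| Out (m : name) (Q : term)
| Par (P Q : term)
| PAbs (P : term)                  (* <X>P, binds process variable 0 in P *)
| PApp (P Q : term)
| NAbs (P : term)                  (* <x>P, binds name variable 0 in P *)
| NApp (P : term) (n : name).

Definition up_ren (f : nat -> nat) : nat -> nat :=
  fun i => match i with 0 => 0 | S k => S (f k) end.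

Definition ren_name (g : nat -> nat) (m : name) : name :=
  match m with NC c => NC c | NV i => NV (g i) end.

Fixpoint ren (f g : nat -> nat) (P : term) : term :=
  match P with
  | Nil => Nil
  | PVar i => PVar (f i)
  | Inp m P => Inp (ren_name g m) (ren (up_ren f) g P)
  | Out m Q => Out (ren_name g m) (ren f g Q)
  | Par P Q => Par (ren f g P) (ren f g Q)
  | PAbs P => PAbs (ren (up_ren f) g P)
  | PApp P Q => PApp (ren f g P) (ren f g Q)
  | NAbs P => NAbs (ren f (up_ren g) P)
  | NApp P n => NApp (ren f g P) (ren_name g n)
  end.

Definition liftP (P : term) : term := ren S (fun i => i) P.

Definition up_psub (s : nat -> term) : nat -> term :=
  fun i => match i with 0 => PVar 0 | S k => ren S (fun j => j) (s k) end.
Definition upn_psub (s : nat -> term) : nat -> term :=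
  fun i => ren (fun j => j) S (s i).

Fixpoint psubst (s : nat -> term) (P : term) : term :=
  match P with
  | Nil => Nil
  | PVar i => s i
  | Inp m P => Inp m (psubst (up_psub s) P)
  | Out m Q => Out m (psubst s Q)
  | Par P Q => Par (psubst s P) (psubst s Q)
  | PAbs P => PAbs (psubst (up_psub s) P)
  | PApp P Q => PApp (psubst s P) (psubst s Q)
  | NAbs P => NAbs (psubst (upn_psub s) P)
  | NApp P n => NApp (psubst s P) n
  end.

Definition psubst1 (Q : term) (P : term) : term :=
  psubst (fun i => match i with 0 => Q | S k => PVar k end) P.

Definition subst_name (t : nat -> name) (m : name) : name :=
  match m with NC c => NC c | NV i => t i end.
Definition up_nsub (t : nat -> name) : nat -> name :=
  fun i => match i with 0 => NV 0 | S k => ren_name S (t k) end.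

Fixpoint nsubst (t : nat -> name) (P : term) : term :=
  match P with
  | Nil => Nil
  | PVar i => PVar i
  | Inp m P => Inp (subst_name t m) (nsubst t P)
  | Out m Q => Out (subst_name t m) (nsubst t Q)
  | Par P Q => Par (nsubst t P) (nsubst t Q)
  | PAbs P => PAbs (nsubst t P)
  | PApp P Q => PApp (nsubst t P) (nsubst t Q)
  | NAbs P => NAbs (nsubst (up_nsub t) P)
  | NApp P n => NApp (nsubst t P) (subst_name t n)
  end.

Definition nsubst1 (m : name) (P : term) : term :=
  nsubst (fun i => match i with 0 => m | S k => NV k end) P.

Inductive scong : term -> term -> Prop :=
| sc_refl P : scong P P
| sc_sym P Q : scong P Q -> scong Q P
| sc_trans P Q R : scong P Q -> scong Q R -> scong P R
| sc_par_assoc P Q R : scong (Par P (Par Q R)) (Par (Par P Q) R)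
| sc_par_comm P Q : scong (Par P Q) (Par Q P)
| sc_par_nil P : scong (Par P Nil) P
| sc_beta_p P Q : scong (PApp (PAbs P) Q) (psubst1 Q P)
| sc_beta_n P m : scong (NApp (NAbs P) m) (nsubst1 m P)
| sc_inp m P P' : scong P P' -> scong (Inp m P) (Inp m P')
| sc_out m Q Q' : scong Q Q' -> scong (Out m Q) (Out m Q')
| sc_par P P' Q Q' : scong P P' -> scong Q Q' -> scong (Par P Q) (Par P' Q')
| sc_pabs P P' : scong P P' -> scong (PAbs P) (PAbs P')
| sc_papp P P' Q Q' : scong P P' -> scong Q Q' -> scong (PApp P Q) (PApp P' Q')
| sc_nabs P P' : scong P P' -> scong (NAbs P) (NAbs P')
| sc_napp P P' n : scong P P' -> scong (NApp P n) (NApp P' n).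

(* LInp m stands for the input label m(X); the bound X is process variable 0
   of the derivative. *)
Inductive label : Type :=
| LOut (m : name) (A : term)
| LInp (m : name)
| LTau.

Inductive trans : term -> label -> term -> Prop :=
| tr_inp m P : trans (Inp m P) (LInp m) P
| tr_out m Q : trans (Out m Q) (LOut m Q) Nil
| tr_parl_out P Q m A P' :
    trans P (LOut m A) P' -> trans (Par P Q) (LOut m A) (Par P' Q)
| tr_parl_tau P Q P' :
    trans P LTau P' -> trans (Par P Q) LTau (Par P' Q)
| tr_parl_inp P Q m P' :       (* X chosen fresh for Q: Q is lifted *)
    trans P (LInp m) P' -> trans (Par P Q) (LInp m) (Par P' (liftP Q))
| tr_parr_out P Q m A Q' :
    trans Q (LOut m A) Q' -> trans (Par P Q) (LOut m A) (Par P Q')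
| tr_parr_tau P Q Q' :
    trans Q LTau Q' -> trans (Par P Q) LTau (Par P Q')
| tr_parr_inp P Q m Q' :
    trans Q (LInp m) Q' -> trans (Par P Q) (LInp m) (Par (liftP P) Q')
| tr_comm_l P Q m A P' Q' :
    trans P (LOut m A) P' -> trans Q (LInp m) Q' ->
    trans (Par P Q) LTau (Par P' (psubst1 A Q'))
| tr_comm_r P Q m A P' Q' :
    trans P (LInp m) P' -> trans Q (LOut m A) Q' ->
    trans (Par P Q) LTau (Par (psubst1 A P') Q')
| tr_scong P P0 l P0' P' :
    scong P P0 -> trans P0 l P0' -> scong P0' P' -> trans P l P'.

Definition is_bisimulation (R : term -> term -> Prop) : Prop :=
  forall P Q, R P Q ->
  (((forall A, ~ scong P (PAbs A)) /\ (forall A, ~ scong P (NAbs A))) ->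
     (forall B, ~ scong Q (PAbs B)) /\ (forall B, ~ scong Q (NAbs B))) /\
  (forall A, scong P (PAbs A) -> exists B, scong Q (PAbs B) /\ R A B) /\
  (forall A, scong P (NAbs A) -> exists B, scong Q (NAbs B) /\ R A B) /\
  (forall m A P', trans P (LOut m A) P' ->
     exists B Q', trans Q (LOut m B) Q' /\ R A B /\ R P' Q') /\
  (forall m P', trans P (LInp m) P' ->
     exists Q', trans Q (LInp m) Q' /\ R P' Q') /\
  (forall i P', scong P (Par (PVar i) P') ->
     exists Q', scong Q (Par (PVar i) Q') /\ R P' Q') /\
  (forall i A P', scong P (Par (PApp (PVar i) A) P') ->
     exists B Q', scong Q (Par (PApp (PVar i) B) Q') /\ R A B /\ R P' Q') /\
  (forall i d P', scong P (Par (NApp (PVar i) d) P') ->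
     exists Q', scong Q (Par (NApp (PVar i) d) Q') /\ R P' Q').

Definition bisim (P Q : term) : Prop :=
  exists R : term -> term -> Prop,
    (forall A B, R A B -> R B A) /\ is_bisimulation R /\ R P Q.

Fixpoint prod (l : list term) : term :=
  match l with
  | [] => Nil
  | [P] => P
  | P :: l' => Par P (prod l')
  end.

(* left-to-right instances of DIS (with k = n+1 >= 1), APP1, APP2.
   In DIS the inner copies of m(X).P sit under the outer binder X,
   hence are lifted. *)
Inductive law : term -> term -> Prop :=
| law_dis m P n :
    law (Inp m (Par P (prod (repeat (liftP (Inp m P)) n))))
        (prod (repeat (Inp m P) (S n)))
| law_app1 P Q : law (PApp (PAbs P) Q) (psubst1 Q P)
| law_app2 P m : law (NApp (NAbs P) m) (nsubst1 m P).

Inductive ctx_step : term -> term -> Prop :=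
| cs_law P Q : law P Q -> ctx_step P Q
| cs_inp m P P' : ctx_step P P' -> ctx_step (Inp m P) (Inp m P')
| cs_out m Q Q' : ctx_step Q Q' -> ctx_step (Out m Q) (Out m Q')
| cs_parl P P' Q : ctx_step P P' -> ctx_step (Par P Q) (Par P' Q)
| cs_parr P Q Q' : ctx_step Q Q' -> ctx_step (Par P Q) (Par P Q')
| cs_pabs P P' : ctx_step P P' -> ctx_step (PAbs P) (PAbs P')
| cs_pappl P P' Q : ctx_step P P' -> ctx_step (PApp P Q) (PApp P' Q)
| cs_pappr P Q Q' : ctx_step Q Q' -> ctx_step (PApp P Q) (PApp P Q')
| cs_nabs P P' : ctx_step P P' -> ctx_step (NAbs P) (NAbs P')
| cs_napp P P' n : ctx_step P P' -> ctx_step (NApp P n) (NApp P' n).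

Definition rw (P Q : term) : Prop :=
  exists P' Q', scong P' P /\ scong Q' Q /\ ctx_step P' Q'.

Definition normal_form (P : term) : Prop := forall Q, ~ rw P Q.

Definition is_nf_of (P Q : term) : Prop :=
  clos_refl_trans term rw P Q /\ normal_form Q.

From Stdlib Require Import List Relations Permutation Lia Wf_nat FunctionalExtensionality.
Import ListNotations.

(* Each rewrite step is a [law_eq]-step: APP1 and APP2 are instances of
   [scong], and DIS is an instance of [dis], a parallel form of DIS.  So it
   suffices that [law_eq], the equivalence generated by [scong] and [dis], is
   a bisimulation.

   Every clause of bisimilarity asks what a term is structurally congruent
   to: an abstraction, or a parallel composition with an observable
   component (a prefix, a variable, or a variable applied to an argument).
   As [scong] contains beta in both directions, such questions are settled
   by reduction: parallel beta-reduction modulo associativity and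
   commutativity ([pstep]) has the diamond property up to [ac], so
   structurally congruent terms have [ac]-equal common reducts.  A [dis]
   step commutes with [pstep] in both directions and matches abstractions
   and observable components on either side up to [law_eq], which then
   carries over to observations made up to [scong]. *)

Lemma up_ren_id : up_ren (fun i => i) = (fun i => i).
Proof. apply functional_extensionality; intros [|i]; reflexivity. Qed.

Lemma ren_name_id m : ren_name (fun i => i) m = m.
Proof. destruct m; reflexivity. Qed.

Lemma ren_name_ren f g m : ren_name f (ren_name g m) = ren_name (fun i => f (g i)) m.
Proof. destruct m; reflexivity. Qed.

Lemma up_ren_comp f g : (fun i => up_ren f (up_ren g i)) = up_ren (fun i => f (g i)).
Proof. apply functional_extensionality; intros [|i]; reflexivity. Qed.

Lemma ren_ren P : forall f g f' g',
  ren f g (ren f' g' P) = ren (fun i => f (f' i)) (fun i => g (g' i)) P.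
Proof.
  induction P; intros; simpl;
    rewrite ?ren_name_ren, ?IHP, ?IHP1, ?IHP2, ?up_ren_comp; reflexivity.
Qed.

Lemma ren_id P : ren (fun i => i) (fun i => i) P = P.
Proof.
  induction P; simpl; rewrite ?ren_name_id, ?up_ren_id, ?IHP, ?IHP1, ?IHP2; reflexivity.
Qed.

Lemma ren_psubst P : forall f g s,
  ren f g (psubst s P) = psubst (fun i => ren f g (s i)) (ren (fun i => i) g P).
Proof.
  induction P; intros; simpl; rewrite ?up_ren_id, ?IHP, ?IHP1, ?IHP2; try reflexivity;
    do 2 f_equal; apply functional_extensionality; intros [|i];
    unfold up_psub, upn_psub; rewrite ?ren_ren; reflexivity.
Qed.

Lemma psubst_ren P : forall f s,
  psubst s (ren f (fun i => i) P) = psubst (fun i => s (f i)) P.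
Proof.
  induction P; intros; simpl; rewrite ?up_ren_id, ?ren_name_id, ?IHP, ?IHP1, ?IHP2;
    try reflexivity;
    do 2 f_equal; apply functional_extensionality; intros [|i]; reflexivity.
Qed.

Lemma psubst_id P : psubst PVar P = P.
Proof.
  assert (Hup : up_psub PVar = PVar)
    by (apply functional_extensionality; intros [|i]; reflexivity).
  assert (Hupn : upn_psub PVar = PVar) by reflexivity.
  induction P; simpl; rewrite ?Hup, ?Hupn, ?IHP, ?IHP1, ?IHP2; reflexivity.
Qed.

Lemma psubst_psubst P : forall s s',
  psubst s (psubst s' P) = psubst (fun i => psubst s (s' i)) P.
Proof.
  induction P; intros; simpl; rewrite ?IHP, ?IHP1, ?IHP2; try reflexivity;
    do 2 f_equal; apply functional_extensionality; intros [|i]; simpl;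
    unfold upn_psub; rewrite ?psubst_ren, ?ren_psubst, ?ren_id; reflexivity.
Qed.

Lemma ren_nsubst P : forall f g t,
  ren f g (nsubst t P) = nsubst (fun i => ren_name g (t i)) (ren f (fun i => i) P).
Proof.
  induction P; intros; simpl; rewrite ?up_ren_id, ?IHP, ?IHP1, ?IHP2;
    try destruct m; try destruct n; simpl; rewrite ?ren_name_id; try reflexivity.
  do 2 f_equal. apply functional_extensionality; intros [|i]; simpl; [reflexivity|].
  unfold up_nsub. destruct (t i); reflexivity.
Qed.

Lemma nsubst_ren P : forall f g t,
  nsubst t (ren f g P) = ren f (fun i => i) (nsubst (fun i => t (g i)) P).
Proof.
  induction P; intros; simpl; rewrite ?up_ren_id, ?IHP, ?IHP1, ?IHP2;
    try destruct m; try destruct n; simpl; rewrite ?ren_name_id; try reflexivity.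
  do 3 f_equal. apply functional_extensionality; intros [|i]; reflexivity.
Qed.

Lemma nsubst_id P : nsubst NV P = P.
Proof.
  assert (Hup : up_nsub NV = NV)
    by (apply functional_extensionality; intros [|i]; reflexivity).
  induction P; simpl; rewrite ?Hup; try destruct m; try destruct n; simpl;
    rewrite ?IHP, ?IHP1, ?IHP2; reflexivity.
Qed.

Lemma nsubst_psubst P : forall t s,
  nsubst t (psubst s P) = psubst (fun i => nsubst t (s i)) (nsubst t P).
Proof.
  induction P; intros; simpl; rewrite ?IHP, ?IHP1, ?IHP2; try reflexivity;
    do 2 f_equal; apply functional_extensionality.
  1,2: intros [|i]; simpl; [reflexivity|]; unfold up_psub; rewrite nsubst_ren; reflexivity.
  intros i. unfold upn_psub. rewrite nsubst_ren, ren_id, ren_nsubst, ren_id. reflexivity.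
Qed.

Lemma psubst_nsubst P : forall t s s',
  (forall i, nsubst t (s' i) = s i) ->
  psubst s (nsubst t P) = nsubst t (psubst s' P).
Proof.
  induction P; intros t s s' H; simpl; try reflexivity.
  - symmetry; apply H.
  - rewrite (IHP t _ (up_psub s')); [reflexivity|].
    intros [|i]; simpl; [reflexivity|]. unfold up_psub. rewrite nsubst_ren, H. reflexivity.
  - rewrite (IHP t _ s'); auto.
  - rewrite (IHP1 t _ s'), (IHP2 t _ s'); auto.
  - rewrite (IHP t _ (up_psub s')); [reflexivity|].
    intros [|i]; simpl; [reflexivity|]. unfold up_psub. rewrite nsubst_ren, H. reflexivity.
  - rewrite (IHP1 t _ s'), (IHP2 t _ s'); auto.
  - rewrite (IHP _ _ (upn_psub s')); [reflexivity|].
    intros i. unfold upn_psub. rewrite nsubst_ren, ren_id, <- H, ren_nsubst, ren_id.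
    reflexivity.
  - rewrite (IHP t _ s'); auto.
Qed.

Lemma nsubst_nsubst P : forall t t',
  nsubst t (nsubst t' P) = nsubst (fun i => subst_name t (t' i)) P.
Proof.
  induction P; intros; simpl; rewrite ?IHP, ?IHP1, ?IHP2;
    try destruct m; try destruct n; try reflexivity.
  do 2 f_equal. apply functional_extensionality; intros [|i]; simpl; [reflexivity|].
  unfold up_nsub. destruct (t' i); reflexivity.
Qed.

Lemma psubst_psubst1 s Q P :
  psubst s (psubst1 Q P) = psubst1 (psubst s Q) (psubst (up_psub s) P).
Proof.
  unfold psubst1. rewrite !psubst_psubst. f_equal.
  apply functional_extensionality; intros [|i]; simpl; [reflexivity|].
  rewrite psubst_ren. symmetry. apply psubst_id.
Qed.

Lemma ren_psubst1 f g Q P :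
  ren f g (psubst1 Q P) = psubst1 (ren f g Q) (ren (up_ren f) g P).
Proof.
  unfold psubst1. rewrite ren_psubst.
  replace (ren (up_ren f) g P)
    with (ren (up_ren f) (fun i => i) (ren (fun i => i) g P)) by (rewrite ren_ren; reflexivity).
  rewrite psubst_ren. f_equal.
  apply functional_extensionality; intros [|i]; reflexivity.
Qed.

Lemma nsubst_psubst1 t Q P :
  nsubst t (psubst1 Q P) = psubst1 (nsubst t Q) (nsubst t P).
Proof.
  unfold psubst1. rewrite nsubst_psubst. f_equal.
  apply functional_extensionality; intros [|i]; reflexivity.
Qed.

Lemma psubst_nsubst1 s m P :
  psubst s (nsubst1 m P) = nsubst1 m (psubst (upn_psub s) P).
Proof.
  unfold nsubst1. apply psubst_nsubst. intros i. unfold upn_psub.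
  rewrite nsubst_ren, ren_id. apply nsubst_id.
Qed.

Lemma ren_nsubst1 f g m P :
  ren f g (nsubst1 m P) = nsubst1 (ren_name g m) (ren f (up_ren g) P).
Proof.
  unfold nsubst1. rewrite ren_nsubst, (nsubst_ren P f (up_ren g)), (ren_nsubst _ f (fun i => i)).
  f_equal. apply functional_extensionality; intros [|i]; simpl; rewrite ?ren_name_id; reflexivity.
Qed.

Lemma nsubst_nsubst1 t m P :
  nsubst t (nsubst1 m P) = nsubst1 (subst_name t m) (nsubst (up_nsub t) P).
Proof.
  unfold nsubst1. rewrite !nsubst_nsubst. f_equal.
  apply functional_extensionality; intros [|i]; simpl; [reflexivity|].
  unfold up_nsub. destruct (t i); reflexivity.
Qed.

Lemma liftP_psubst s P : liftP (psubst s P) = psubst (up_psub s) (liftP P).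
Proof. unfold liftP. rewrite ren_psubst, ren_id, psubst_ren. reflexivity. Qed.

Lemma liftP_nsubst t P : liftP (nsubst t P) = nsubst t (liftP P).
Proof. unfold liftP. rewrite nsubst_ren. reflexivity. Qed.

Lemma ren_prod f g l : ren f g (prod l) = prod (map (ren f g) l).
Proof. induction l as [|x [|y l] IH]; simpl in *; rewrite ?IH; reflexivity. Qed.

Lemma psubst_prod s l : psubst s (prod l) = prod (map (psubst s) l).
Proof. induction l as [|x [|y l] IH]; simpl in *; rewrite ?IH; reflexivity. Qed.

Lemma nsubst_prod t l : nsubst t (prod l) = prod (map (nsubst t) l).
Proof. induction l as [|x [|y l] IH]; simpl in *; rewrite ?IH; reflexivity. Qed.

(** * Structural congruence without beta *)

Inductive ac : term -> term -> Prop :=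
| ac_refl P : ac P P
| ac_sym P Q : ac P Q -> ac Q P
| ac_trans P Q R : ac P Q -> ac Q R -> ac P R
| ac_assoc P Q R : ac (Par P (Par Q R)) (Par (Par P Q) R)
| ac_comm P Q : ac (Par P Q) (Par Q P)
| ac_nil P : ac (Par P Nil) P
| ac_inp m P P' : ac P P' -> ac (Inp m P) (Inp m P')
| ac_out m Q Q' : ac Q Q' -> ac (Out m Q) (Out m Q')
| ac_par P P' Q Q' : ac P P' -> ac Q Q' -> ac (Par P Q) (Par P' Q')
| ac_pabs P P' : ac P P' -> ac (PAbs P) (PAbs P')
| ac_papp P P' Q Q' : ac P P' -> ac Q Q' -> ac (PApp P Q) (PApp P' Q')
| ac_nabs P P' : ac P P' -> ac (NAbs P) (NAbs P')
| ac_napp P P' n : ac P P' -> ac (NApp P n) (NApp P' n).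

#[local] Hint Constructors ac : core.

Lemma ac_scong P Q : ac P Q -> scong P Q.
Proof. induction 1; eauto using scong. Qed.

Lemma ac_ren P Q f g : ac P Q -> ac (ren f g P) (ren f g Q).
Proof. intros H; revert f g; induction H; intros; simpl; eauto. Qed.

Lemma ac_psubst P Q s : ac P Q -> ac (psubst s P) (psubst s Q).
Proof. intros H; revert s; induction H; intros; simpl; eauto. Qed.

Lemma ac_nsubst P Q t : ac P Q -> ac (nsubst t P) (nsubst t Q).
Proof. intros H; revert t; induction H; intros; simpl; eauto. Qed.

Lemma ac_psubst_pointwise P : forall s s',
  (forall i, ac (s i) (s' i)) -> ac (psubst s P) (psubst s' P).
Proof.
  induction P; intros s s' H; simpl; auto.
  - apply ac_inp, IHP. intros [|i]; simpl; auto. apply ac_ren, H.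
  - apply ac_pabs, IHP. intros [|i]; simpl; auto. apply ac_ren, H.
  - apply ac_nabs, IHP. intros i; apply ac_ren, H.
Qed.

Lemma ac_psubst1 Q Q' P P' : ac Q Q' -> ac P P' -> ac (psubst1 Q P) (psubst1 Q' P').
Proof.
  intros HQ HP. apply ac_trans with (psubst1 Q P'); [apply ac_psubst, HP|].
  apply ac_psubst_pointwise. intros [|i]; simpl; auto.
Qed.

Lemma scong_ren P Q f g : scong P Q -> scong (ren f g P) (ren f g Q).
Proof.
  intros H; revert f g; induction H; intros; simpl; eauto using scong.
  - rewrite ren_psubst1. apply sc_beta_p.
  - rewrite ren_nsubst1. apply sc_beta_n.
Qed.

Lemma scong_psubst P Q s : scong P Q -> scong (psubst s P) (psubst s Q).
Proof.
  intros H; revert s; induction H; intros; simpl; eauto using scong.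
  - rewrite psubst_psubst1. apply sc_beta_p.
  - rewrite psubst_nsubst1. apply sc_beta_n.
Qed.

Lemma scong_nsubst P Q t : scong P Q -> scong (nsubst t P) (nsubst t Q).
Proof.
  intros H; revert t; induction H; intros; simpl; eauto using scong.
  - rewrite nsubst_psubst1. apply sc_beta_p.
  - rewrite nsubst_nsubst1. apply sc_beta_n.
Qed.

(** * Prime decomposition *)

(* A term is AC-congruent to the parallel product of its prime components,
   and [ac] is decided on these: a permutation relating components whose
   heads agree and whose immediate subterms are [ac]. *)

Fixpoint primes (P : term) : list term :=
  match P with
  | Nil => []
  | Par P Q => primes P ++ primes Q
  | _ => [P]
  end.

Definition is_prime (p : term) : Prop :=
  match p with Nil | Par _ _ => False | _ => True end.

Definition ac_head (p q : term) : Prop :=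
  match p, q with
  | Inp m P, Inp m' P' => m = m' /\ ac P P'
  | Out m P, Out m' P' => m = m' /\ ac P P'
  | PVar i, PVar j => i = j
  | PAbs P, PAbs P' => ac P P'
  | PApp P Q, PApp P' Q' => ac P P' /\ ac Q Q'
  | NAbs P, NAbs P' => ac P P'
  | NApp P n, NApp P' n' => ac P P' /\ n = n'
  | _, _ => False
  end.

Definition prime_perm (l1 l2 : list term) : Prop :=
  exists l, Permutation l1 l /\ Forall2 ac_head l l2.

Lemma ac_head_sym p q : ac_head p q -> ac_head q p.
Proof. destruct p, q; simpl; intuition eauto. Qed.

Lemma ac_head_trans p q r : ac_head p q -> ac_head q r -> ac_head p r.
Proof. destruct p, q, r; simpl; intuition (subst; eauto). Qed.

Lemma ac_head_refl p : is_prime p -> ac_head p p.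
Proof. destruct p; simpl; intuition. Qed.

Lemma ac_head_ac p q : ac_head p q -> ac p q.
Proof. destruct p, q; simpl; intuition (subst; eauto). Qed.

Lemma ac_head_prime p q : ac_head p q -> is_prime p.
Proof. destruct p, q; simpl; tauto. Qed.

Lemma primes_prime p : is_prime p -> primes p = [p].
Proof. destruct p; simpl; tauto. Qed.

Lemma Forall_primes P : Forall is_prime (primes P).
Proof. induction P; simpl; try apply Forall_app; repeat constructor; auto. Qed.

Lemma Forall2_ac_head_refl l : Forall is_prime l -> Forall2 ac_head l l.
Proof. induction 1; constructor; auto using ac_head_refl. Qed.

Lemma prime_perm_of_perm l l' : Permutation l l' -> Forall is_prime l' -> prime_perm l l'.
Proof. intros. exists l'; auto using Forall2_ac_head_refl. Qed.

Lemma prime_perm_sym l m : prime_perm l m -> prime_perm m l.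
Proof.
  intros [k [Hp HF]].
  destruct (Permutation_Forall2 (Permutation_sym Hp) HF) as [m' [H1 H2]].
  exists m'; split; auto.
  apply Forall2_flip in H2. revert H2. apply Forall2_impl. intros a b. apply ac_head_sym.
Qed.

Lemma prime_perm_trans l m n : prime_perm l m -> prime_perm m n -> prime_perm l n.
Proof.
  intros [k [Hp HF]] [k' [Hp' HF']].
  apply Forall2_flip in HF.
  destruct (Permutation_Forall2 Hp' HF) as [k2 [H1 H2]].
  exists k2. split; [eauto using Permutation_trans|].
  apply Forall2_flip in H2. clear - H2 HF'. revert n HF'.
  induction H2; intros n HF'; inversion HF'; subst; eauto using ac_head_trans.
Qed.

Lemma prime_perm_app l1 l2 m1 m2 :
  prime_perm l1 m1 -> prime_perm l2 m2 -> prime_perm (l1 ++ l2) (m1 ++ m2).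
Proof.
  intros [k1 [H1 F1]] [k2 [H2 F2]]. exists (k1 ++ k2).
  split; [apply Permutation_app|apply Forall2_app]; auto.
Qed.

Lemma prime_perm_head p q : ac_head p q -> prime_perm [p] [q].
Proof. exists [p]; auto. Qed.

Lemma ac_primes P Q : ac P Q -> prime_perm (primes P) (primes Q).
Proof.
  induction 1; simpl;
    try (apply prime_perm_head; simpl; auto; fail);
    eauto using prime_perm_sym, prime_perm_trans, prime_perm_app.
  - apply prime_perm_of_perm, Forall_primes. apply Permutation_refl.
  - rewrite app_assoc. apply prime_perm_of_perm; [apply Permutation_refl|].
    apply (Forall_primes (Par (Par P Q) R)).
  - apply prime_perm_of_perm; [apply Permutation_app_comm|].
    apply (Forall_primes (Par Q P)).
  - rewrite app_nil_r. apply prime_perm_of_perm, Forall_primes. apply Permutation_refl.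
Qed.

Lemma ac_prod_cons x l : ac (prod (x :: l)) (Par x (prod l)).
Proof. destruct l; simpl; auto. Qed.

Lemma ac_prod_app l1 l2 : ac (prod (l1 ++ l2)) (Par (prod l1) (prod l2)).
Proof.
  induction l1 as [|x l1 IH]; simpl.
  - eapply ac_trans; [apply ac_sym, ac_nil | apply ac_comm].
  - eapply ac_trans; [apply ac_prod_cons|].
    eapply ac_trans; [apply ac_par; [apply ac_refl | exact IH]|].
    eapply ac_trans; [apply ac_assoc|]. apply ac_par; auto. apply ac_sym, ac_prod_cons.
Qed.

Lemma ac_prod_perm l l' : Permutation l l' -> ac (prod l) (prod l').
Proof.
  induction 1; eauto.
  - eapply ac_trans; [apply ac_prod_cons|]. eapply ac_trans; [|apply ac_sym, ac_prod_cons]. auto.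
  - eapply ac_trans; [apply ac_prod_cons|]. eapply ac_trans; [|apply ac_sym, ac_prod_cons].
    eapply ac_trans; [apply ac_par; [apply ac_refl | apply ac_prod_cons]|].
    eapply ac_trans; [|apply ac_par; [apply ac_refl | apply ac_sym, ac_prod_cons]].
    eapply ac_trans; [apply ac_assoc|]. eapply ac_trans; [|apply ac_sym, ac_assoc].
    auto.
Qed.

Lemma ac_prod_Forall2 l m : Forall2 ac_head l m -> ac (prod l) (prod m).
Proof.
  induction 1; auto.
  eapply ac_trans; [apply ac_prod_cons|]. eapply ac_trans; [|apply ac_sym, ac_prod_cons].
  auto using ac_head_ac.
Qed.

Lemma ac_prod_primes X : ac X (prod (primes X)).
Proof.
  induction X; simpl; auto.
  eapply ac_trans; [|apply ac_sym, ac_prod_app]. auto.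
Qed.

Lemma primes_ac X Y : prime_perm (primes X) (primes Y) -> ac X Y.
Proof.
  intros [k [Hp HF]].
  eapply ac_trans; [apply ac_prod_primes|].
  eapply ac_trans; [apply ac_prod_perm, Hp|].
  eapply ac_trans; [apply ac_prod_Forall2, HF|]. apply ac_sym, ac_prod_primes.
Qed.

Lemma primes_prod l : Forall is_prime l -> primes (prod l) = l.
Proof.
  induction 1 as [|x l Hx Hl IH]; [reflexivity|].
  destruct l as [|y l]; simpl in *; [|rewrite IH]; destruct x; simpl in *; tauto.
Qed.

Lemma prime_perm_single_inv x m : prime_perm [x] m -> exists y, m = [y] /\ ac_head x y.
Proof.
  intros [k [Hp HF]]. apply Permutation_length_1_inv in Hp. subst.
  inversion HF as [|? y ? ? Hxy Hnil]; subst. inversion Hnil; eauto.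
Qed.

Lemma prime_perm_cons_inv x l m : prime_perm (x :: l) m ->
  exists y m', Permutation m (y :: m') /\ ac_head x y /\ prime_perm l m'.
Proof.
  intros [k [Hp HF]].
  assert (Hin : In x k) by (eapply Permutation_in; eauto; left; auto).
  apply in_split in Hin. destruct Hin as [k1 [k2 ->]].
  apply Forall2_app_inv_l in HF. destruct HF as [m1 [m2' [F1 [F2 ->]]]].
  inversion F2; subst.
  exists y, (m1 ++ l'). split; [apply Permutation_sym, Permutation_middle|].
  split; auto. exists (k1 ++ k2). split.
  - eapply Permutation_cons_app_inv; eauto.
  - apply Forall2_app; auto.
Qed.

Lemma prime_perm_nil_r l : prime_perm l [] -> l = [].
Proof.
  intros [k [Hp HF]]. inversion HF; subst. apply Permutation_nil, Permutation_sym, Hp.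
Qed.

Lemma ac_prime_ac_head p q : is_prime p -> is_prime q -> ac p q -> ac_head p q.
Proof.
  intros Hp Hq H. apply ac_primes in H. rewrite !primes_prime in H by assumption.
  apply prime_perm_single_inv in H. destruct H as [y [Hy Ha]]. congruence.
Qed.

Lemma ac_prime_inv X q : is_prime q -> ac X q -> exists y, primes X = [y] /\ ac_head y q.
Proof.
  intros Hq H. apply ac_primes, prime_perm_sym in H. rewrite primes_prime in H by assumption.
  apply prime_perm_single_inv in H. destruct H as [y [Hy Ha]].
  exists y; split; auto using ac_head_sym.
Qed.

Lemma ac_nil_iff X : ac X Nil <-> primes X = [].
Proof.
  split; intros H.
  - apply ac_primes in H. apply prime_perm_nil_r, H.
  - apply primes_ac. rewrite H. exists []; auto.
Qed.

Lemma ac_prime_not_nil q : is_prime q -> ~ ac q Nil.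
Proof. intros Hq H. apply ac_nil_iff in H. rewrite primes_prime in H by exact Hq. discriminate. Qed.

Lemma ac_par_prime a b q : is_prime q -> ac (Par a b) q ->
  (primes a = [] /\ ac b q) \/ (primes b = [] /\ ac a q).
Proof.
  intros Hq H. destruct (ac_prime_inv _ _ Hq H) as [y [Hy Ha]]. simpl in Hy.
  assert (Hyp : is_prime y) by (eapply ac_head_prime; eauto).
  assert (Hy_ac : forall X, primes X = [y] -> ac X q).
  { intros X HX. eapply ac_trans; [|apply ac_head_ac, Ha].
    apply primes_ac. rewrite HX, primes_prime by exact Hyp.
    apply prime_perm_head, ac_head_refl, Hyp. }
  apply app_eq_unit in Hy. destruct Hy as [[Ha1 Hb1]|[Ha1 Hb1]]; auto.
Qed.

(** * Parallel beta-reduction modulo AC *)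

Fixpoint size (P : term) : nat :=
  match P with
  | Nil | PVar _ => 1
  | Inp _ P | Out _ P | PAbs P | NAbs P | NApp P _ => S (size P)
  | Par P Q | PApp P Q => S (size P + size Q)
  end.

Lemma size_ind (Pr : term -> Prop) :
  (forall X, (forall Y, size Y < size X -> Pr Y) -> Pr X) -> forall X, Pr X.
Proof.
  intros H X. induction X as [X IH] using (well_founded_ind (well_founded_ltof _ size)).
  apply H, IH.
Qed.

Lemma size_primes X p : In p (primes X) -> size p <= size X.
Proof.
  induction X; simpl; intros H; try (destruct H as [H|[]]; subst; simpl; lia).
  - contradiction.
  - apply in_app_or in H. destruct H as [H|H]; [apply IHX1 in H|apply IHX2 in H]; lia.
Qed.

Definition abs (b : bool) : term -> term := if b then PAbs else NAbs.

Lemma abs_prime b B : is_prime (abs b B).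
Proof. destruct b; exact I. Qed.

Lemma ac_abs_inv b X B : ac X (abs b B) -> exists B0, size B0 < size X /\ ac B0 B.
Proof.
  intros H. destruct (ac_prime_inv _ _ (abs_prime b B) H) as [y [Hy Ha]].
  assert (Hs : size y <= size X) by (apply size_primes; rewrite Hy; left; reflexivity).
  destruct b, y; simpl in Ha; try contradiction; exists y; simpl in Hs; split; auto; lia.
Qed.

(* The beta rules fire on any function position that is AC-congruent to an
   abstraction, as [scong] allows. *)
Inductive pstep : term -> term -> Prop :=
| pstep_nil : pstep Nil Nil
| pstep_pvar i : pstep (PVar i) (PVar i)
| pstep_inp m P P' : pstep P P' -> pstep (Inp m P) (Inp m P')
| pstep_out m Q Q' : pstep Q Q' -> pstep (Out m Q) (Out m Q')
| pstep_par P P' Q Q' : pstep P P' -> pstep Q Q' -> pstep (Par P Q) (Par P' Q')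
| pstep_pabs P P' : pstep P P' -> pstep (PAbs P) (PAbs P')
| pstep_papp P P' Q Q' : pstep P P' -> pstep Q Q' -> pstep (PApp P Q) (PApp P' Q')
| pstep_nabs P P' : pstep P P' -> pstep (NAbs P) (NAbs P')
| pstep_napp P P' n : pstep P P' -> pstep (NApp P n) (NApp P' n)
| pstep_beta X B B' Q Q' : ac X (PAbs B) -> pstep B B' -> pstep Q Q' ->
    pstep (PApp X Q) (psubst1 Q' B')
| pstep_nbeta X B B' n : ac X (NAbs B) -> pstep B B' ->
    pstep (NApp X n) (nsubst1 n B').

#[local] Hint Constructors pstep : core.

Lemma pstep_refl P : pstep P P.
Proof. induction P; auto. Qed.

#[local] Hint Resolve pstep_refl : core.

Ltac inv H := inversion H; subst; clear H.

Lemma pstep_scong P Q : pstep P Q -> scong P Q.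
Proof.
  induction 1; eauto using scong.
  - eapply sc_trans; [apply sc_papp; [apply ac_scong; eassumption | eassumption]|].
    eapply sc_trans; [apply sc_papp; [apply sc_pabs; eassumption | apply sc_refl]|].
    apply sc_beta_p.
  - eapply sc_trans; [apply sc_napp; eapply sc_trans; [apply ac_scong; eassumption|]|].
    + apply sc_nabs; eassumption.
    + apply sc_beta_n.
Qed.

Lemma pstep_ren P Q f g : pstep P Q -> pstep (ren f g P) (ren f g Q).
Proof.
  intros H; revert f g; induction H; intros; simpl; auto.
  - rewrite ren_psubst1. eapply pstep_beta; eauto. apply (ac_ren _ _ f g) in H. exact H.
  - rewrite ren_nsubst1. eapply pstep_nbeta; eauto. apply (ac_ren _ _ f g) in H. exact H.
Qed.

Lemma pstep_psubst P P' s s' : pstep P P' -> (forall i, pstep (s i) (s' i)) ->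
  pstep (psubst s P) (psubst s' P').
Proof.
  intros H; revert s s'; induction H; intros s s' Hs; simpl; auto.
  - constructor. apply IHpstep. intros [|i]; simpl; auto. apply pstep_ren, Hs.
  - constructor. apply IHpstep. intros [|i]; simpl; auto. apply pstep_ren, Hs.
  - constructor. apply IHpstep. intros i; apply pstep_ren, Hs.
  - rewrite psubst_psubst1. eapply pstep_beta; [apply (ac_psubst _ _ s) in H; exact H | |auto].
    apply IHpstep1. intros [|i]; simpl; auto. apply pstep_ren, Hs.
  - rewrite psubst_nsubst1. eapply pstep_nbeta; [apply (ac_psubst _ _ s) in H; exact H|].
    apply IHpstep. intros i; apply pstep_ren, Hs.
Qed.

Lemma pstep_psubst1 Q Q' B B' : pstep Q Q' -> pstep B B' -> pstep (psubst1 Q B) (psubst1 Q' B').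
Proof. intros. apply pstep_psubst; auto. intros [|i]; simpl; auto. Qed.

Lemma pstep_nsubst P P' t : pstep P P' -> pstep (nsubst t P) (nsubst t P').
Proof.
  intros H; revert t; induction H; intros t; simpl; auto.
  - rewrite nsubst_psubst1. eapply pstep_beta; eauto. apply (ac_nsubst _ _ t) in H. exact H.
  - rewrite nsubst_nsubst1. eapply pstep_nbeta; eauto. apply (ac_nsubst _ _ t) in H. exact H.
Qed.

Ltac sim_sub := repeat match goal with
  | IH : forall Y, pstep ?X Y -> exists Y', _, h : pstep ?X ?Z |- context [?Z] =>
      destruct (IH _ h) as [? [? ?]]; clear h
  end.

Lemma ac_pstep_sim_both X X' : ac X X' ->
  (forall Y, pstep X Y -> exists Y', pstep X' Y' /\ ac Y Y') /\
  (forall Y', pstep X' Y' -> exists Y, pstep X Y /\ ac Y Y').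
Proof.
  induction 1;
    try destruct IHac as [H1 H2]; try destruct IHac1 as [H1 H2]; try destruct IHac2 as [H3 H4].
  - split; intros; eauto.
  - split; intros Y HY.
    + destruct (H2 _ HY) as [Y' [? ?]]. eauto.
    + destruct (H1 _ HY) as [Y' [? ?]]. eauto.
  - split; intros Y HY.
    + destruct (H1 _ HY) as [Y1 [Ha Hb]]. destruct (H3 _ Ha) as [Y2 [? ?]]. eauto.
    + destruct (H4 _ HY) as [Y1 [Ha Hb]]. destruct (H2 _ Ha) as [Y2 [? ?]]. eauto.
  - split; intros Y HY; inv HY; match goal with h : pstep (Par _ _) _ |- _ => inv h end; eauto.
  - split; intros Y HY; inv HY; eauto.
  - split; intros Y HY.
    + inv HY. match goal with h : pstep Nil _ |- _ => inv h end. eauto.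
    + exists (Par Y Nil). eauto.
  - split; intros Y HY; inv HY; sim_sub; eauto.
  - split; intros Y HY; inv HY; sim_sub; eauto.
  - split; intros Y HY; inv HY; sim_sub; eauto.
  - split; intros Y HY; inv HY; sim_sub; eauto.
  - split; intros Y HY; inv HY; sim_sub.
    + eauto.
    + eexists; split; [eapply pstep_beta; [eapply ac_trans; [apply ac_sym, H|]|..] |]; eauto.
      apply ac_psubst1; auto.
    + eauto.
    + eexists; split; [eapply pstep_beta; [eapply ac_trans; [apply H|]|..] |]; eauto.
      apply ac_psubst1; auto.
  - split; intros Y HY; inv HY; sim_sub; eauto.
  - split; intros Y HY; inv HY; sim_sub.
    + eauto.
    + eexists; split; [eapply pstep_nbeta; [eapply ac_trans; [apply ac_sym, H|]|] | apply ac_refl];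
        eauto.
    + eauto.
    + eexists; split; [eapply pstep_nbeta; [eapply ac_trans; [apply H|]|] | apply ac_refl]; eauto.
Qed.

Lemma ac_pstep_sim X X' Y : ac X X' -> pstep X Y -> exists Y', pstep X' Y' /\ ac Y Y'.
Proof. intros H; apply (proj1 (ac_pstep_sim_both _ _ H)). Qed.

Lemma ac_abs_pstep b X B X' :
  ac X (abs b B) -> pstep X X' -> exists B', ac X' (abs b B') /\ pstep B B'.
Proof.
  intros H1 H2. destruct (ac_pstep_sim _ _ _ H1 H2) as [Y [HY HA]].
  destruct b; inv HY; eauto.
Qed.

Definition pjoin (Y1 Y2 : term) : Prop :=
  exists Z1 Z2, pstep Y1 Z1 /\ pstep Y2 Z2 /\ ac Z1 Z2.

Lemma pjoin_sym Y1 Y2 : pjoin Y1 Y2 -> pjoin Y2 Y1.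
Proof. intros [Z1 [Z2 [? [? ?]]]]. exists Z2, Z1; auto. Qed.

Lemma pstep_diamond_beta X1 Q B B1 Q1 Y2 :
  (forall X0, size X0 < size (PApp X1 Q) ->
     forall Y1 Y2, pstep X0 Y1 -> pstep X0 Y2 -> pjoin Y1 Y2) ->
  ac X1 (PAbs B) -> pstep B B1 -> pstep Q Q1 -> pstep (PApp X1 Q) Y2 ->
  pjoin (psubst1 Q1 B1) Y2.
Proof.
  intros IH HX HB HQ HY.
  destruct (ac_abs_inv true _ _ HX) as [B0 [Hs0 HB0]].
  destruct (ac_pstep_sim _ _ _ (ac_sym _ _ HB0) HB) as [B1' [HB1' HaB1]].
  assert (Hjoin : forall C C2 Q2, ac B0 C -> pstep C C2 -> pstep Q Q2 ->
     exists Z1 W Zq, pstep (psubst1 Q1 B1) Z1 /\ pstep C2 W /\ pstep Q2 Zq /\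
                     ac Z1 (psubst1 Zq W)).
  { intros C C2 Q2 HC HCC HQ2.
    destruct (ac_pstep_sim _ _ _ (ac_sym _ _ HC) HCC) as [C2' [HC2' HaC2]].
    destruct (IH B0 ltac:(simpl; lia) _ _ HB1' HC2') as [Zb1 [Zb2 [P1 [P2 A12]]]].
    destruct (IH Q ltac:(simpl; lia) _ _ HQ HQ2) as [Zq1 [Zq2 [R1 [R2 A3]]]].
    destruct (ac_pstep_sim _ _ _ (ac_sym _ _ HaB1) P1) as [W1 [PW1 AW1]].
    destruct (ac_pstep_sim _ _ _ (ac_sym _ _ HaC2) P2) as [W2 [PW2 AW2]].
    exists (psubst1 Zq1 W1), W2, Zq2. repeat split; auto using pstep_psubst1.
    apply ac_psubst1; auto. eauto. }
  inv HY.
  - match goal with h : pstep X1 ?X2 |- _ =>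
      destruct (ac_abs_pstep true _ _ _ HX h) as [B2 [HX2 HB2]] end.
    match goal with h : pstep Q ?Q2 |- _ =>
      destruct (Hjoin _ _ _ HB0 HB2 h) as [Z1 [W [Zq [? [? [? ?]]]]]] end.
    exists Z1, (psubst1 Zq W). repeat split; eauto.
  - match goal with h : ac X1 (PAbs ?C), h2 : pstep ?C ?C2, h3 : pstep Q ?Q2 |- _ =>
      assert (HBC : ac B C) by
        (apply (ac_prime_ac_head (PAbs B) (PAbs C)); simpl; eauto);
      destruct (Hjoin C C2 _ (ac_trans _ _ _ HB0 HBC) h2 h3) as [Z1 [W [Zq [? [? [? ?]]]]]] end.
    exists Z1, (psubst1 Zq W). repeat split; auto using pstep_psubst1.
Qed.

Lemma pstep_diamond_nbeta X1 n B B1 Y2 :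
  (forall X0, size X0 < size (NApp X1 n) ->
     forall Y1 Y2, pstep X0 Y1 -> pstep X0 Y2 -> pjoin Y1 Y2) ->
  ac X1 (NAbs B) -> pstep B B1 -> pstep (NApp X1 n) Y2 ->
  pjoin (nsubst1 n B1) Y2.
Proof.
  intros IH HX HB HY.
  destruct (ac_abs_inv false _ _ HX) as [B0 [Hs0 HB0]].
  destruct (ac_pstep_sim _ _ _ (ac_sym _ _ HB0) HB) as [B1' [HB1' HaB1]].
  assert (Hjoin : forall C C2, ac B0 C -> pstep C C2 ->
     exists Z1 W, pstep (nsubst1 n B1) Z1 /\ pstep C2 W /\ ac Z1 (nsubst1 n W)).
  { intros C C2 HC HCC.
    destruct (ac_pstep_sim _ _ _ (ac_sym _ _ HC) HCC) as [C2' [HC2' HaC2]].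
    destruct (IH B0 ltac:(simpl; lia) _ _ HB1' HC2') as [Zb1 [Zb2 [P1 [P2 A12]]]].
    destruct (ac_pstep_sim _ _ _ (ac_sym _ _ HaB1) P1) as [W1 [PW1 AW1]].
    destruct (ac_pstep_sim _ _ _ (ac_sym _ _ HaC2) P2) as [W2 [PW2 AW2]].
    exists (nsubst1 n W1), W2. unfold nsubst1.
    repeat split; auto using pstep_nsubst. apply ac_nsubst. eauto. }
  inv HY.
  - match goal with h : pstep X1 ?X2 |- _ =>
      destruct (ac_abs_pstep false _ _ _ HX h) as [B2 [HX2 HB2]] end.
    destruct (Hjoin _ _ HB0 HB2) as [Z1 [W [? [? ?]]]].
    exists Z1, (nsubst1 n W). repeat split; eauto.
  - match goal with h : ac X1 (NAbs ?C), h2 : pstep ?C ?C2 |- _ =>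
      assert (HBC : ac B C) by
        (apply (ac_prime_ac_head (NAbs B) (NAbs C)); simpl; eauto);
      destruct (Hjoin C C2 (ac_trans _ _ _ HB0 HBC) h2) as [Z1 [W [? [? ?]]]] end.
    exists Z1, (nsubst1 n W). unfold nsubst1. repeat split; auto using pstep_nsubst.
Qed.

Ltac join_sub IH t := match goal with h1 : pstep t ?a, h2 : pstep t ?b |- _ =>
  destruct (IH t ltac:(simpl; lia) _ _ h1 h2) as [?Z1 [?Z2 [? [? ?]]]]; clear h1 h2 end.
Ltac close_join := repeat split; try (constructor; eassumption); auto.

Lemma pstep_diamond X Y1 Y2 : pstep X Y1 -> pstep X Y2 -> pjoin Y1 Y2.
Proof.
  revert Y1 Y2. induction X as [X IH] using size_ind. intros Y1 Y2 H1 H2. unfold pjoin.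
  destruct H1.
  - inv H2. exists Nil, Nil; auto.
  - inv H2. exists (PVar i), (PVar i); auto.
  - inv H2. join_sub IH P. eexists (Inp m _), (Inp m _); close_join.
  - inv H2. join_sub IH Q. eexists (Out m _), (Out m _); close_join.
  - inv H2. join_sub IH P. join_sub IH Q. eexists (Par _ _), (Par _ _); close_join.
  - inv H2. join_sub IH P. eexists (PAbs _), (PAbs _); close_join.
  - inv H2.
    + join_sub IH P. join_sub IH Q. eexists (PApp _ _), (PApp _ _); close_join.
    + apply pjoin_sym. eapply pstep_diamond_beta; eauto.
  - inv H2. join_sub IH P. eexists (NAbs _), (NAbs _); close_join.
  - inv H2.
    + join_sub IH P. eexists (NApp _ n), (NApp _ n); close_join.
    + apply pjoin_sym. eapply pstep_diamond_nbeta; eauto.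
  - eapply pstep_diamond_beta; eauto.
  - eapply pstep_diamond_nbeta; eauto.
Qed.

Notation psteps := (clos_refl_trans term pstep).

#[local] Hint Constructors clos_refl_trans : core.

Lemma ac_psteps_sim X X' Y : ac X X' -> psteps X Y -> exists Y', psteps X' Y' /\ ac Y Y'.
Proof.
  intros HX H; revert X' HX; induction H as [X Y H| |X M Y _ IH1 _ IH2]; intros X' HX.
  - destruct (ac_pstep_sim _ _ _ HX H) as [Y' [? ?]]. exists Y'; eauto.
  - exists X'; eauto.
  - destruct (IH1 _ HX) as [M' [? HM]]. destruct (IH2 _ HM) as [Y' [? ?]]. eauto.
Qed.

Lemma pstep_psteps_strip X Y1 Y2 : pstep X Y1 -> psteps X Y2 ->
  exists Z1 Z2, psteps Y1 Z1 /\ pstep Y2 Z2 /\ ac Z1 Z2.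
Proof.
  intros H1 H2; revert Y1 H1; induction H2 as [X Y2 H2| |X M Y2 _ IH1 _ IH2]; intros Y1 H1.
  - destruct (pstep_diamond _ _ _ H1 H2) as [Z1 [Z2 [? [? ?]]]]. exists Z1, Z2; eauto.
  - exists Y1, Y1; eauto.
  - destruct (IH1 _ H1) as [Z1 [Z2 [HZ1 [HZ2 A12]]]].
    destruct (IH2 _ HZ2) as [W1 [W2 [HW1 [HW2 AW]]]].
    destruct (ac_psteps_sim _ _ _ (ac_sym _ _ A12) HW1) as [W1' [? ?]].
    exists W1', W2. repeat split; [eapply rt_trans | |eapply ac_trans]; eauto.
Qed.

Lemma psteps_confluent X Y1 Y2 : psteps X Y1 -> psteps X Y2 ->
  exists Z1 Z2, psteps Y1 Z1 /\ psteps Y2 Z2 /\ ac Z1 Z2.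
Proof.
  intros H1; revert Y2; induction H1 as [X Y1 H1| |X M Y1 _ IH1 _ IH2]; intros Y2 H2.
  - destruct (pstep_psteps_strip _ _ _ H1 H2) as [Z1 [Z2 [? [? ?]]]]. exists Z1, Z2; eauto.
  - exists Y2, Y2; eauto.
  - destruct (IH1 _ H2) as [Z1 [Z2 [HZ1 [HZ2 A12]]]].
    destruct (IH2 _ HZ1) as [W1 [W2 [HW1 [HW2 AW]]]].
    destruct (ac_psteps_sim _ _ _ A12 HW2) as [W2' [? ?]].
    exists W1, W2'. repeat split; [| eapply rt_trans | eapply ac_trans]; eauto.
Qed.

Definition joinable (P Q : term) : Prop :=
  exists Z1 Z2, psteps P Z1 /\ psteps Q Z2 /\ ac Z1 Z2.

Lemma psteps_congr1 (F : term -> term) :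
  (forall P P', pstep P P' -> pstep (F P) (F P')) ->
  forall P P', psteps P P' -> psteps (F P) (F P').
Proof. intros HF P P' H; induction H; eauto. Qed.

Lemma psteps_congr2 (F : term -> term -> term) :
  (forall P P' Q Q', pstep P P' -> pstep Q Q' -> pstep (F P Q) (F P' Q')) ->
  forall P P' Q Q', psteps P P' -> psteps Q Q' -> psteps (F P Q) (F P' Q').
Proof.
  intros HF P P' Q Q' H1 H2. apply rt_trans with (F P' Q).
  - apply (psteps_congr1 (fun x => F x Q)); auto.
  - apply (psteps_congr1 (fun x => F P' x)); auto.
Qed.

Lemma joinable_congr1 (F : term -> term) :
  (forall P P', pstep P P' -> pstep (F P) (F P')) -> (forall P P', ac P P' -> ac (F P) (F P')) ->
  forall P P', joinable P P' -> joinable (F P) (F P').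
Proof.
  intros Hp Ha P P' [Z1 [Z2 [? [? ?]]]].
  exists (F Z1), (F Z2). auto using psteps_congr1.
Qed.

Lemma joinable_congr2 (F : term -> term -> term) :
  (forall P P' Q Q', pstep P P' -> pstep Q Q' -> pstep (F P Q) (F P' Q')) ->
  (forall P P' Q Q', ac P P' -> ac Q Q' -> ac (F P Q) (F P' Q')) ->
  forall P P' Q Q', joinable P P' -> joinable Q Q' -> joinable (F P Q) (F P' Q').
Proof.
  intros Hp Ha P P' Q Q' [Z1 [Z2 [? [? ?]]]] [W1 [W2 [? [? ?]]]].
  exists (F Z1 W1), (F Z2 W2). auto using psteps_congr2.
Qed.

Lemma scong_joinable P Q : scong P Q -> joinable P Q.
Proof.
  induction 1;
    try (apply joinable_congr1; auto; fail); try (apply joinable_congr2; auto; fail);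
    try (eexists _, _; repeat split; [apply rt_refl | apply rt_refl | auto]; fail).
  - destruct IHscong as [Z1 [Z2 [? [? ?]]]]. exists Z2, Z1; auto.
  - destruct IHscong1 as [Z1 [Z2 [HPZ [HQZ A12]]]], IHscong2 as [W1 [W2 [HQW [HRW AW]]]].
    destruct (psteps_confluent Q Z2 W1 HQZ HQW) as [U1 [U2 [HZU [HWU AU]]]].
    destruct (ac_psteps_sim _ _ _ (ac_sym _ _ A12) HZU) as [U1' [? ?]].
    destruct (ac_psteps_sim _ _ _ AW HWU) as [U2' [? ?]].
    exists U1', U2'. repeat split; [eapply rt_trans | eapply rt_trans | ]; eauto.
  - exists (psubst1 Q P), (psubst1 Q P). repeat split; auto.
    apply rt_step. eapply pstep_beta; eauto.
  - exists (nsubst1 m P), (nsubst1 m P). repeat split; auto.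
    apply rt_step. eapply pstep_nbeta; eauto.
  - apply (joinable_congr1 (fun x => NApp x n)); auto.
Qed.

(** * DIS-reduction and the law equivalence *)

(* [dis] performs DIS in parallel at any set of positions, up to [ac] on
   the right.  In [dis_law] the copies [Ps] of the body need not be equal:
   it suffices that the body, with any copy singled out and the others
   kept as guarded replicas, is [law_eq] to the original body.  This is
   the form of DIS that is stable under parallel beta-reduction. *)
Inductive dis : term -> term -> Prop :=
| dis_nil : dis Nil Nil
| dis_pvar i : dis (PVar i) (PVar i)
| dis_inp m P P' : dis P P' -> dis (Inp m P) (Inp m P')
| dis_out m Q Q' : dis Q Q' -> dis (Out m Q) (Out m Q')
| dis_par P P' Q Q' Y : dis P P' -> dis Q Q' -> ac Y (Par P' Q') -> dis (Par P Q) Y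
| dis_pabs P P' : dis P P' -> dis (PAbs P) (PAbs P')
| dis_papp P P' Q Q' : dis P P' -> dis Q Q' -> dis (PApp P Q) (PApp P' Q')
| dis_nabs P P' : dis P P' -> dis (NAbs P) (NAbs P')
| dis_napp P P' n : dis P P' -> dis (NApp P n) (NApp P' n)
| dis_law m X Y Ps : Ps <> [] -> ac Y (prod (map (Inp m) Ps)) ->
    (forall p rest, Permutation Ps (p :: rest) ->
       law_eq X (Par p (liftP (prod (map (Inp m) rest))))) ->
    dis (Inp m X) Y
with law_eq : term -> term -> Prop :=
| law_eq_scong P Q : scong P Q -> law_eq P Q
| law_eq_dis P Q : dis P Q -> law_eq P Q
| law_eq_sym P Q : law_eq P Q -> law_eq Q P
| law_eq_trans P Q R : law_eq P Q -> law_eq Q R -> law_eq P R.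

Scheme dis_ind2 := Induction for dis Sort Prop
with law_eq_ind2 := Induction for law_eq Sort Prop.
Combined Scheme dis_law_eq_ind from dis_ind2, law_eq_ind2.

Lemma dis_refl P : dis P P.
Proof. induction P; econstructor; eauto. Qed.

#[local] Hint Resolve dis_refl : core.

Lemma law_eq_refl P : law_eq P P.
Proof. apply law_eq_scong, sc_refl. Qed.

Lemma law_eq_ac P Q : ac P Q -> law_eq P Q.
Proof. intros; apply law_eq_scong, ac_scong; auto. Qed.

Lemma law_eq_congr1 (F : term -> term) :
  (forall x y, scong x y -> scong (F x) (F y)) -> (forall x y, dis x y -> dis (F x) (F y)) ->
  forall x y, law_eq x y -> law_eq (F x) (F y).
Proof. intros H1 H2 x y H. induction H; eauto using law_eq. Qed.

Lemma law_eq_par a a' b b' : law_eq a a' -> law_eq b b' -> law_eq (Par a b) (Par a' b').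
Proof.
  intros H1 H2. apply law_eq_trans with (Par a' b).
  - apply (law_eq_congr1 (fun x => Par x b)); auto.
    + intros; apply sc_par; auto using sc_refl.
    + intros; econstructor; eauto using ac_refl.
  - apply (law_eq_congr1 (fun x => Par a' x)); auto.
    + intros; apply sc_par; auto using sc_refl.
    + intros; econstructor; eauto using ac_refl.
Qed.

Lemma Permutation_map_cons_inv {A B} (f : A -> B) l p rest :
  Permutation (map f l) (p :: rest) ->
  exists p0 rest0, p = f p0 /\ rest = map f rest0 /\ Permutation l (p0 :: rest0).
Proof.
  intros Hp. apply Permutation_sym, Permutation_map_inv in Hp.
  destruct Hp as [[|p0 rest0] [Heq Hp]]; inversion Heq; subst.
  exists p0, rest0. auto using Permutation_sym.
Qed.

Lemma dis_law_eq_ren :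
  (forall P Q, dis P Q -> forall f g, dis (ren f g P) (ren f g Q)) /\
  (forall P Q, law_eq P Q -> forall f g, law_eq (ren f g P) (ren f g Q)).
Proof.
  apply dis_law_eq_ind; try (intros; simpl; econstructor; eauto using ac_ren, scong_ren; fail).
  - intros m X Y Ps Hne Hac HEQ IH f g. simpl.
    apply dis_law with (Ps := map (ren (up_ren f) g) Ps).
    + destruct Ps; simpl; congruence.
    + apply (ac_ren _ _ f g) in Hac. rewrite ren_prod, !map_map in Hac. rewrite map_map. exact Hac.
    + intros p rest Hp. destruct (Permutation_map_cons_inv _ _ _ _ Hp) as [p0 [rest0 [-> [-> Hp0]]]].
      specialize (IH p0 rest0 Hp0 (up_ren f) g). simpl in IH. unfold liftP in IH |- *.
      replace (map (Inp (ren_name g m)) (map (ren (up_ren f) g) rest0))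
        with (map (ren f g) (map (Inp m) rest0)) by (rewrite !map_map; reflexivity).
      rewrite <- ren_prod, ren_ren. rewrite ren_ren in IH. exact IH.
Qed.

Lemma dis_ren P Q f g : dis P Q -> dis (ren f g P) (ren f g Q).
Proof. intros H; apply (proj1 dis_law_eq_ren); auto. Qed.

Lemma law_eq_lift P Q : law_eq P Q -> law_eq (liftP P) (liftP Q).
Proof. intros H; apply (proj2 dis_law_eq_ren); auto. Qed.

Lemma dis_psubst_pointwise P : forall s s',
  (forall i, dis (s i) (s' i)) -> dis (psubst s P) (psubst s' P).
Proof.
  induction P; intros s s' H; simpl; try (constructor; auto; fail).
  - auto.
  - constructor. apply IHP. intros [|i]; simpl; auto using dis_ren.
  - apply dis_par with (psubst s' P1) (psubst s' P2); auto using ac_refl.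
  - constructor. apply IHP. intros [|i]; simpl; auto using dis_ren.
  - constructor. apply IHP. intros i; apply dis_ren, H.
Qed.

Lemma dis_law_eq_psubst :
  (forall P Q, dis P Q -> forall s s', (forall i, dis (s i) (s' i)) ->
     dis (psubst s P) (psubst s' Q)) /\
  (forall P Q, law_eq P Q -> forall s, law_eq (psubst s P) (psubst s Q)).
Proof.
  apply dis_law_eq_ind; try (intros; simpl; econstructor; eauto using scong_psubst; fail).
  - intros; simpl; auto.
  - intros m P P' _ IH s s' H; simpl; constructor. apply IH.
    intros [|i]; simpl; auto using dis_ren.
  - intros P P' Q Q' Y _ IH1 _ IH2 Hac s s' H. simpl.
    apply dis_par with (psubst s' P') (psubst s' Q'); auto.
    apply (ac_psubst _ _ s') in Hac. exact Hac.
  - intros P P' _ IH s s' H; simpl; constructor. apply IH.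
    intros [|i]; simpl; auto using dis_ren.
  - intros P P' _ IH s s' H; simpl; constructor. apply IH.
    intros i; apply dis_ren, H.
  - intros m X Y Ps Hne Hac HEQ IH s s' Hs. simpl.
    apply dis_law with (Ps := map (psubst (up_psub s')) Ps).
    + destruct Ps; simpl; congruence.
    + apply (ac_psubst _ _ s') in Hac. rewrite psubst_prod, !map_map in Hac.
      rewrite map_map. exact Hac.
    + intros p rest Hp. destruct (Permutation_map_cons_inv _ _ _ _ Hp) as [p0 [rest0 [-> [-> Hp0]]]].
      eapply law_eq_trans; [exact (IH p0 rest0 Hp0 (up_psub s))|]. apply law_eq_dis.
      replace (Par (psubst (up_psub s') p0)
                (liftP (prod (map (Inp m) (map (psubst (up_psub s')) rest0)))))
        with (psubst (up_psub s') (Par p0 (liftP (prod (map (Inp m) rest0))))).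
      * apply dis_psubst_pointwise. intros [|i]; simpl; auto using dis_ren.
      * simpl. rewrite <- liftP_psubst, psubst_prod, !map_map. reflexivity.
Qed.

Lemma dis_psubst1 Q Q' B B' : dis Q Q' -> dis B B' -> dis (psubst1 Q B) (psubst1 Q' B').
Proof. intros. apply dis_law_eq_psubst; auto. intros [|i]; simpl; auto. Qed.

Lemma dis_law_eq_nsubst :
  (forall P Q, dis P Q -> forall t, dis (nsubst t P) (nsubst t Q)) /\
  (forall P Q, law_eq P Q -> forall t, law_eq (nsubst t P) (nsubst t Q)).
Proof.
  apply dis_law_eq_ind; try (intros; simpl; econstructor; eauto using scong_nsubst; fail).
  - intros P P' Q Q' Y _ IH1 _ IH2 Hac t. simpl.
    apply dis_par with (nsubst t P') (nsubst t Q'); auto.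
    apply (ac_nsubst _ _ t) in Hac. exact Hac.
  - intros m X Y Ps Hne Hac HEQ IH t. simpl.
    apply dis_law with (Ps := map (nsubst t) Ps).
    + destruct Ps; simpl; congruence.
    + apply (ac_nsubst _ _ t) in Hac. rewrite nsubst_prod, !map_map in Hac.
      rewrite map_map. exact Hac.
    + intros p rest Hp. destruct (Permutation_map_cons_inv _ _ _ _ Hp) as [p0 [rest0 [-> [-> Hp0]]]].
      specialize (IH p0 rest0 Hp0 t). simpl in IH.
      rewrite <- liftP_nsubst, nsubst_prod, !map_map in IH. rewrite map_map. exact IH.
Qed.

Lemma dis_nsubst1 n P Q : dis P Q -> dis (nsubst1 n P) (nsubst1 n Q).
Proof. intros; apply dis_law_eq_nsubst; auto. Qed.

Lemma ac_par_nil_l a b : primes a = [] -> ac (Par a b) b.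
Proof.
  intros H. apply ac_nil_iff in H.
  eapply ac_trans; [apply ac_par; [exact H | apply ac_refl]|].
  eapply ac_trans; [apply ac_comm | apply ac_nil].
Qed.

Lemma ac_par_nil_r a b : primes b = [] -> ac (Par a b) a.
Proof.
  intros H. apply ac_nil_iff in H.
  eapply ac_trans; [apply ac_par; [apply ac_refl | exact H] | apply ac_nil].
Qed.

Lemma primes_prod_inp m Ps : primes (prod (map (Inp m) Ps)) = map (Inp m) Ps.
Proof. apply primes_prod. induction Ps; simpl; constructor; simpl; auto. Qed.

Lemma ac_prod_inp_prime m Ps q : is_prime q -> ac (prod (map (Inp m) Ps)) q ->
  exists p, Ps = [p] /\ ac_head (Inp m p) q.
Proof.
  intros Hq H. destruct (ac_prime_inv _ _ Hq H) as [y [Hy Ha]].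
  rewrite primes_prod_inp in Hy.
  destruct Ps as [|p [|p' Ps]]; simpl in Hy; inversion Hy; subst; eauto.
Qed.

Lemma dis_nil_l X Y : dis X Y -> primes X = [] -> primes Y = [].
Proof.
  induction 1; simpl; intros Hn; try discriminate; auto.
  apply app_eq_nil in Hn as [Ha Hb]. apply ac_nil_iff.
  eapply ac_trans; [eassumption|]. eapply ac_trans; [apply ac_par_nil_l; auto|].
  apply ac_nil_iff; auto.
Qed.

Lemma dis_nil_r X Y : dis X Y -> primes Y = [] -> primes X = [].
Proof.
  induction 1; simpl; intros Hn; try discriminate; auto.
  - apply ac_nil_iff in Hn.
    assert (Hx : primes (Par P' Q') = []) by (apply ac_nil_iff; eauto using ac_trans, ac_sym).
    simpl in Hx. apply app_eq_nil in Hx as [? ?]. rewrite IHdis1, IHdis2; auto.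
  - apply ac_nil_iff in Hn.
    assert (Hx : primes (prod (map (Inp m) Ps)) = []) by (apply ac_nil_iff; eauto using ac_trans, ac_sym).
    rewrite primes_prod_inp in Hx. destruct Ps; simpl in Hx; congruence.
Qed.

Ltac prime_dis_witness :=
  match goal with |- exists x y, size x <= size ?X /\ _ /\ _ /\ ac ?Y y =>
    exists X, Y; repeat split;
    [simpl; lia | apply ac_prime_ac_head; [exact I | auto | assumption]
    | econstructor; eauto | apply ac_refl]
  end.

Lemma dis_prime_l X Y q : dis X Y -> is_prime q -> ac X q ->
  exists x y, size x <= size X /\ ac_head x q /\ dis x y /\ ac Y y.
Proof.
  induction 1 as [| | | |P P' Q Q' Y HP IHP HQ IHQ HY| | | | |]; intros Hq HX.
  all: try (destruct (ac_prime_not_nil q Hq); apply ac_sym, HX).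
  all: try prime_dis_witness.
  destruct (ac_par_prime _ _ _ Hq HX) as [[Hn HQq]|[Hn HPq]].
  - destruct (IHQ Hq HQq) as [x [y [? [? [? ?]]]]]. exists x, y. repeat split; auto.
    + simpl; lia.
    + eapply ac_trans; [exact HY|]. eapply ac_trans; [|eassumption].
      apply ac_par_nil_l. eapply dis_nil_l; eauto.
  - destruct (IHP Hq HPq) as [x [y [? [? [? ?]]]]]. exists x, y. repeat split; auto.
    + simpl; lia.
    + eapply ac_trans; [exact HY|]. eapply ac_trans; [|eassumption].
      apply ac_par_nil_r. eapply dis_nil_l; eauto.
Qed.

Lemma dis_prime_r X Y q : dis X Y -> is_prime q -> ac Y q ->
  exists x y, size x <= size X /\ is_prime x /\ ac X x /\ dis x y /\ ac_head y q.
Proof.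
  induction 1 as [| | | |P P' Q Q' Y HP IHP HQ IHQ HY| | | | |m X Y Ps Hne HY Hlaw];
    intros Hq HYq.
  all: try (destruct (ac_prime_not_nil q Hq); apply ac_sym, HYq).
  all: try (match goal with |- exists x y, size x <= size ?X /\ _ => exists X end;
            eexists; repeat split;
            [simpl; lia | apply ac_refl | econstructor; eassumption
            | apply ac_prime_ac_head; [exact I | auto | assumption]]).
  - destruct (ac_par_prime _ _ _ Hq (ac_trans _ _ _ (ac_sym _ _ HY) HYq))
      as [[Hn HQq]|[Hn HPq]].
    + destruct (IHQ Hq HQq) as [x [y [? [? [? [? ?]]]]]]. exists x, y. repeat split; auto.
      * simpl; lia.
      * eapply ac_trans; [|eassumption]. apply ac_par_nil_l. eapply dis_nil_r; eauto.
    + destruct (IHP Hq HPq) as [x [y [? [? [? [? ?]]]]]]. exists x, y. repeat split; auto.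
      * simpl; lia.
      * eapply ac_trans; [|eassumption]. apply ac_par_nil_r. eapply dis_nil_r; eauto.
  - destruct (ac_prod_inp_prime m Ps q Hq (ac_trans _ _ _ (ac_sym _ _ HY) HYq)) as [p [-> Hp]].
    exists (Inp m X), (Inp m p). repeat split; auto using ac_refl.
    apply dis_law with [p]; auto using ac_refl.
Qed.

Lemma dis_abs_l b X Y B : dis X Y -> ac X (abs b B) ->
  exists B0 C0, size B0 < size X /\ ac B0 B /\ dis B0 C0 /\ ac Y (abs b C0).
Proof.
  intros HD HX.
  destruct (dis_prime_l _ _ _ HD (abs_prime b B) HX) as [x [y [Hs [Hxq [Hxy HY]]]]].
  destruct b, x; simpl in *; try contradiction; inv Hxy;
    do 2 eexists; repeat split; eauto; lia.
Qed.

Lemma dis_abs_r b X Y C : dis X Y -> ac Y (abs b C) ->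
  exists B0 C0, size B0 < size X /\ ac X (abs b B0) /\ dis B0 C0 /\ ac C0 C.
Proof.
  intros HD HY.
  destruct (dis_prime_r _ _ _ HD (abs_prime b C) HY)
    as [x [y [Hs [Hx [HXx [Hxy Hyq]]]]]].
  destruct b, y; simpl in *; try contradiction; inv Hxy; simpl in *; try contradiction;
    try (do 2 eexists; repeat split; eauto; lia);
    match goal with h : ac ?Z (prod (map (Inp _) _)) |- _ =>
      destruct (ac_prod_inp_prime _ _ Z I (ac_sym _ _ h)) as [? [_ []]] end.
Qed.

Lemma dis_pvar_l X Y i : dis X Y -> ac X (PVar i) -> ac Y (PVar i).
Proof.
  intros HD HX. destruct (dis_prime_l _ _ (PVar i) HD I HX) as [x [y [_ [Hxq [Hxy HY]]]]].
  destruct x; simpl in Hxq; try contradiction; subst. inv Hxy. exact HY.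
Qed.

Lemma dis_pvar_r X Y i : dis X Y -> ac Y (PVar i) -> ac X (PVar i).
Proof.
  intros HD HY. destruct (dis_prime_r _ _ (PVar i) HD I HY) as [x [y [_ [Hx [HXx [Hxy Hyq]]]]]].
  destruct y; simpl in Hyq; try contradiction; subst.
  inv Hxy; simpl in Hx; try contradiction; auto.
  match goal with h : ac ?Z (prod (map (Inp _) _)) |- _ =>
    destruct (ac_prod_inp_prime _ _ Z I (ac_sym _ _ h)) as [? [_ []]] end.
Qed.

(** * Commuting DIS with parallel beta-reduction *)

Notation red := (clos_refl_trans term (union term pstep ac)).

Lemma red_scong a b : red a b -> scong a b.
Proof. induction 1 as [a b [H|H]| |]; eauto using scong, pstep_scong, ac_scong. Qed.

Lemma red_pstep a b : pstep a b -> red a b.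
Proof. intros; apply rt_step; left; auto. Qed.

Lemma red_ac a b : ac a b -> red a b.
Proof. intros; apply rt_step; right; auto. Qed.

Lemma red_congr1 (F : term -> term) :
  (forall x y, pstep x y -> pstep (F x) (F y)) -> (forall x y, ac x y -> ac (F x) (F y)) ->
  forall x y, red x y -> red (F x) (F y).
Proof. intros H1 H2 x y H. induction H as [x y [H|H]| |]; eauto using red_pstep, red_ac. Qed.

Lemma red_congr2 (F : term -> term -> term) :
  (forall x y x' y', pstep x y -> pstep x' y' -> pstep (F x x') (F y y')) ->
  (forall x y x' y', ac x y -> ac x' y' -> ac (F x x') (F y y')) ->
  forall x y x' y', red x y -> red x' y' -> red (F x x') (F y y').
Proof.
  intros H1 H2 x y x' y' Ha Hb. apply rt_trans with (F y x').
  - apply (red_congr1 (fun u => F u x')); auto using ac_refl.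
  - apply (red_congr1 (fun u => F y u)); auto using ac_refl.
Qed.

Lemma red_inp m a b : red a b -> red (Inp m a) (Inp m b).
Proof. apply red_congr1; auto. Qed.
Lemma red_out m a b : red a b -> red (Out m a) (Out m b).
Proof. apply red_congr1; auto. Qed.
Lemma red_pabs a b : red a b -> red (PAbs a) (PAbs b).
Proof. apply red_congr1; auto. Qed.
Lemma red_nabs a b : red a b -> red (NAbs a) (NAbs b).
Proof. apply red_congr1; auto. Qed.
Lemma red_napp n a b : red a b -> red (NApp a n) (NApp b n).
Proof. apply (red_congr1 (fun x => NApp x n)); auto. Qed.
Lemma red_par a b c d : red a b -> red c d -> red (Par a c) (Par b d).
Proof. apply red_congr2; auto. Qed.
Lemma red_papp a b c d : red a b -> red c d -> red (PApp a c) (PApp b d).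
Proof. apply red_congr2; auto. Qed.
Lemma red_psubst1 a b c d : red a b -> red c d -> red (psubst1 a c) (psubst1 b d).
Proof. apply red_congr2; auto using pstep_psubst1, ac_psubst1. Qed.
Lemma red_nsubst1 n a b : red a b -> red (nsubst1 n a) (nsubst1 n b).
Proof. apply red_congr1; intros; unfold nsubst1; auto using pstep_nsubst, ac_nsubst. Qed.

Lemma pstep_prod_inp_inv m Ps W : pstep (prod (map (Inp m) Ps)) W ->
  exists Ps', W = prod (map (Inp m) Ps') /\ Forall2 pstep Ps Ps'.
Proof.
  revert W; induction Ps as [|p [|p' Ps] IH]; intros W H; simpl in H.
  - inv H. exists []; auto.
  - inv H. exists [P']; auto.
  - inv H. match goal with h : pstep (Inp m p) _ |- _ => inv h end.
    match goal with h : pstep _ Q' |- _ => destruct (IH _ h) as [[|q Ps'] [-> HF]] end.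
    + inversion HF.
    + exists (P'0 :: q :: Ps'). auto.
Qed.

Lemma pstep_prod_inp m l l' : Forall2 pstep l l' ->
  pstep (prod (map (Inp m) l)) (prod (map (Inp m) l')).
Proof.
  induction 1 as [|x x' l l' Hx HF IH]; simpl; auto.
  destruct HF; simpl in *; auto.
Qed.

Lemma dis_ac_r X Y Y' : dis X Y -> ac Y Y' -> dis (Par X Nil) Y'.
Proof.
  intros HD HY. apply dis_par with Y Nil; auto using dis_nil.
  eapply ac_trans; [apply ac_sym, HY | apply ac_sym, ac_nil].
Qed.

Definition dis_pstep_l_at (X : term) : Prop :=
  forall Y X', dis X Y -> pstep X X' -> exists X'' Y', ac X' X'' /\ red Y Y' /\ dis X'' Y'.

Lemma dis_pstep_l_beta P P' Q Q' B B' Q1 :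
  (forall X0, size X0 < size (PApp P Q) -> dis_pstep_l_at X0) ->
  dis P P' -> dis Q Q' -> ac P (PAbs B) -> pstep B B' -> pstep Q Q1 ->
  exists X'' Y', ac (psubst1 Q1 B') X'' /\ red (PApp P' Q') Y' /\ dis X'' Y'.
Proof.
  intros IH HP HQ HPB HB HQ1.
  destruct (dis_abs_l true _ _ _ HP HPB) as [B0 [C0 [Hs0 [HB0 [HD0 HC0]]]]].
  destruct (ac_pstep_sim _ _ _ (ac_sym _ _ HB0) HB) as [B0' [HP0 HA0]].
  destruct (IH B0 ltac:(simpl; lia) _ _ HD0 HP0) as [B0'' [C1 [Ha [Hr Hd]]]].
  destruct (IH Q ltac:(simpl; lia) _ _ HQ HQ1) as [Q2 [Q3 [Ha' [Hr' Hd']]]].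
  exists (psubst1 Q2 B0''), (psubst1 Q3 C1). repeat split.
  - apply ac_psubst1; eauto using ac_trans.
  - eapply rt_trans; [apply red_pstep; eapply pstep_beta; [exact HC0 | apply pstep_refl..]|].
    apply red_psubst1; auto.
  - apply dis_psubst1; auto.
Qed.

Lemma dis_pstep_l_nbeta P P' n B B' :
  (forall X0, size X0 < size (NApp P n) -> dis_pstep_l_at X0) ->
  dis P P' -> ac P (NAbs B) -> pstep B B' ->
  exists X'' Y', ac (nsubst1 n B') X'' /\ red (NApp P' n) Y' /\ dis X'' Y'.
Proof.
  intros IH HP HPB HB.
  destruct (dis_abs_l false _ _ _ HP HPB) as [B0 [C0 [Hs0 [HB0 [HD0 HC0]]]]].
  destruct (ac_pstep_sim _ _ _ (ac_sym _ _ HB0) HB) as [B0' [HP0 HA0]].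
  destruct (IH B0 ltac:(simpl; lia) _ _ HD0 HP0) as [B0'' [C1 [Ha [Hr Hd]]]].
  exists (nsubst1 n B0''), (nsubst1 n C1). repeat split.
  - unfold nsubst1. apply ac_nsubst. eauto using ac_trans.
  - eapply rt_trans; [apply red_pstep; eapply pstep_nbeta; [exact HC0 | apply pstep_refl]|].
    apply red_nsubst1; auto.
  - apply dis_nsubst1; auto.
Qed.

Ltac dis_sub IH t X Y := match goal with hd : dis t _, hp : pstep t _ |- _ =>
  destruct (IH t ltac:(simpl; lia) _ _ hd hp) as [X [Y [? [? ?]]]]; clear hd hp end.

Lemma dis_pstep_l X : dis_pstep_l_at X.
Proof.
  induction X as [X IH] using size_ind. intros Y X' HD HP.
  destruct HD; inv HP.
  - exists Nil, Nil. repeat split; auto using ac_refl, dis_refl.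
  - exists (PVar i), (PVar i).
    repeat split; auto using ac_refl, dis_refl.
  - dis_sub IH P P2 P3. exists (Inp m P2), (Inp m P3).
    repeat split; auto using ac_inp, red_inp, dis_inp.
  - dis_sub IH Q Q2 Q3. exists (Out m Q2), (Out m Q3).
    repeat split; auto using ac_out, red_out, dis_out.
  - dis_sub IH P P2 P3. dis_sub IH Q Q2 Q3. exists (Par P2 Q2), (Par P3 Q3).
    repeat split; auto using ac_par.
    + eapply rt_trans; [apply red_ac; eassumption | apply red_par; auto].
    + eauto using dis_par, ac_refl.
  - dis_sub IH P P2 P3. exists (PAbs P2), (PAbs P3).
    repeat split; auto using ac_pabs, red_pabs, dis_pabs.
  - dis_sub IH P P2 P3. dis_sub IH Q Q2 Q3. exists (PApp P2 Q2), (PApp P3 Q3).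
    repeat split; auto using ac_papp, red_papp, dis_papp.
  - eapply dis_pstep_l_beta; eauto.
  - dis_sub IH P P2 P3. exists (NAbs P2), (NAbs P3).
    repeat split; auto using ac_nabs, red_nabs, dis_nabs.
  - dis_sub IH P P2 P3. exists (NApp P2 n), (NApp P3 n).
    repeat split; auto using ac_napp, red_napp, dis_napp.
  - eapply dis_pstep_l_nbeta; eauto.
  - exists (Inp m P'), Y. repeat split; auto using ac_refl.
    apply dis_law with Ps; auto.
    intros p rest Hp. eapply law_eq_trans; [apply law_eq_sym, law_eq_scong, pstep_scong|]; eauto.
Qed.

Definition dis_pstep_r_at (X : term) : Prop :=
  forall Y Y', dis X Y -> pstep Y Y' -> exists X', red X X' /\ dis X' Y'.

Lemma dis_pstep_r_beta P P' Q Q' C C' Q1 :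
  (forall X0, size X0 < size (PApp P Q) -> dis_pstep_r_at X0) ->
  dis P P' -> dis Q Q' -> ac P' (PAbs C) -> pstep C C' -> pstep Q' Q1 ->
  exists X', red (PApp P Q) X' /\ dis X' (psubst1 Q1 C').
Proof.
  intros IH HP HQ HPC HC HQ1.
  destruct (dis_abs_r true _ _ _ HP HPC) as [B0 [C0 [Hs0 [HB0 [HD0 HC0]]]]].
  destruct (ac_pstep_sim _ _ _ (ac_sym _ _ HC0) HC) as [C0' [HP0 HA0]].
  destruct (IH B0 ltac:(simpl; lia) _ _ HD0 HP0) as [B1 [Hr Hd]].
  destruct (IH Q ltac:(simpl; lia) _ _ HQ HQ1) as [Q2 [Hr' Hd']].
  exists (psubst1 Q2 (Par B1 Nil)). split.
  - eapply rt_trans; [apply red_pstep; eapply pstep_beta; [exact HB0 | apply pstep_refl..]|].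
    apply red_psubst1; auto. eapply rt_trans; [exact Hr | apply red_ac, ac_sym, ac_nil].
  - apply dis_psubst1; auto. eapply dis_ac_r; eauto using ac_sym.
Qed.

Lemma dis_pstep_r_nbeta P P' n C C' :
  (forall X0, size X0 < size (NApp P n) -> dis_pstep_r_at X0) ->
  dis P P' -> ac P' (NAbs C) -> pstep C C' ->
  exists X', red (NApp P n) X' /\ dis X' (nsubst1 n C').
Proof.
  intros IH HP HPC HC.
  destruct (dis_abs_r false _ _ _ HP HPC) as [B0 [C0 [Hs0 [HB0 [HD0 HC0]]]]].
  destruct (ac_pstep_sim _ _ _ (ac_sym _ _ HC0) HC) as [C0' [HP0 HA0]].
  destruct (IH B0 ltac:(simpl; lia) _ _ HD0 HP0) as [B1 [Hr Hd]].
  exists (nsubst1 n (Par B1 Nil)). split.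
  - eapply rt_trans; [apply red_pstep; eapply pstep_nbeta; [exact HB0 | apply pstep_refl]|].
    apply red_nsubst1. eapply rt_trans; [exact Hr | apply red_ac, ac_sym, ac_nil].
  - apply dis_nsubst1. eapply dis_ac_r; eauto using ac_sym.
Qed.

Lemma dis_law_pstep m X Ps Ps' :
  Forall2 pstep Ps Ps' ->
  (forall p rest, Permutation Ps (p :: rest) ->
     law_eq X (Par p (liftP (prod (map (Inp m) rest))))) ->
  forall p' rest', Permutation Ps' (p' :: rest') ->
     law_eq X (Par p' (liftP (prod (map (Inp m) rest')))).
Proof.
  intros HF Hlaw p' rest' Hp.
  apply Forall2_flip in HF.
  destruct (Permutation_Forall2 Hp HF) as [[|p rest] [Hk Fk]]; inversion Fk; subst.
  eapply law_eq_trans; [apply Hlaw, Hk|].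
  apply law_eq_scong, pstep_scong, pstep_par; auto.
  apply pstep_ren, pstep_prod_inp, Forall2_flip; assumption.
Qed.

Ltac dis_sub_r IH t X := match goal with hd : dis t ?u, hp : pstep ?u _ |- _ =>
  destruct (IH t ltac:(simpl; lia) _ _ hd hp) as [X [? ?]]; clear hd hp end.

Lemma dis_pstep_r X : dis_pstep_r_at X.
Proof.
  induction X as [X IH] using size_ind. intros Y Y' HD HP.
  destruct HD.
  - inv HP. exists Nil. auto using dis_nil.
  - inv HP. exists (PVar i). auto using dis_pvar.
  - inv HP. dis_sub_r IH P P2. exists (Inp m P2). auto using red_inp, dis_inp.
  - inv HP. dis_sub_r IH Q Q2. exists (Out m Q2). auto using red_out, dis_out.
  - destruct (ac_pstep_sim _ _ _ H HP) as [W [HW HaW]]. inv HW.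
    dis_sub_r IH P P2. dis_sub_r IH Q Q2.
    exists (Par P2 Q2). split; [apply red_par; auto|]. eapply dis_par; eauto.
  - inv HP. dis_sub_r IH P P2. exists (PAbs P2). auto using red_pabs, dis_pabs.
  - inv HP.
    + dis_sub_r IH P P2. dis_sub_r IH Q Q2. exists (PApp P2 Q2). auto using red_papp, dis_papp.
    + eapply dis_pstep_r_beta; eauto.
  - inv HP. dis_sub_r IH P P2. exists (NAbs P2). auto using red_nabs, dis_nabs.
  - inv HP.
    + dis_sub_r IH P P2. exists (NApp P2 n). auto using red_napp, dis_napp.
    + eapply dis_pstep_r_nbeta; eauto.
  - destruct (ac_pstep_sim _ _ _ H0 HP) as [W [HW HaW]].
    destruct (pstep_prod_inp_inv _ _ _ HW) as [Ps' [-> HF]].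
    exists (Inp m X). split; [apply rt_refl|].
    apply dis_law with Ps'; eauto using ac_sym, dis_law_pstep.
    destruct Ps, Ps'; inversion HF; congruence.
Qed.

(** * Observable components *)

Inductive head : Type :=
| HInp (m : name) (P : term)
| HOut (m : name) (A : term)
| HVar (i : nat)
| HApp (i : nat) (A : term)
| HNApp (i : nat) (d : name)
| HNone.

Definition head_of (G : term) : head :=
  match G with
  | Inp m P => HInp m P
  | Out m A => HOut m A
  | PVar i => HVar i
  | PApp (PVar i) A => HApp i A
  | NApp (PVar i) d => HNApp i d
  | _ => HNone
  end.

Definition observable (G : term) : Prop := head_of G <> HNone.

Definition obs_rel (G G' R R' : term) : Prop :=
  match head_of G, head_of G' with
  | HInp m P, HInp m' P' => m = m' /\ law_eq (Par P (liftP R)) (Par P' (liftP R'))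
  | HOut m A, HOut m' A' => m = m' /\ law_eq A A' /\ law_eq R R'
  | HVar i, HVar j => i = j /\ law_eq R R'
  | HApp i A, HApp j A' => i = j /\ law_eq A A' /\ law_eq R R'
  | HNApp i d, HNApp j d' => i = j /\ d = d' /\ law_eq R R'
  | _, _ => False
  end.

Lemma observable_prime G : observable G -> is_prime G.
Proof. unfold observable; destruct G; simpl; auto. Qed.

Lemma obs_rel_observable G G' R R' : obs_rel G G' R R' -> observable G.
Proof. unfold obs_rel, observable; destruct (head_of G), (head_of G'); simpl; try tauto; congruence. Qed.

Lemma obs_rel_sym G G' R R' : obs_rel G G' R R' -> obs_rel G' G R' R.
Proof.
  unfold obs_rel; destruct (head_of G), (head_of G'); simpl; try tauto;
    intuition (subst; auto using law_eq_sym).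
Qed.

Lemma obs_rel_trans G G' G'' R R' R'' :
  obs_rel G G' R R' -> obs_rel G' G'' R' R'' -> obs_rel G G'' R R''.
Proof.
  unfold obs_rel; destruct (head_of G), (head_of G'), (head_of G''); simpl; try tauto;
    intuition (subst; eauto using law_eq_trans).
Qed.

Lemma obs_rel_refl G R R' : observable G -> law_eq R R' -> obs_rel G G R R'.
Proof.
  unfold observable, obs_rel. destruct (head_of G); intros; try congruence;
    intuition auto using law_eq_refl, law_eq_par, law_eq_lift.
Qed.

Lemma obs_rel_law_eq_resid G G' R R' R1 R1' :
  obs_rel G G' R1 R1' -> law_eq R R1 -> law_eq R' R1' -> obs_rel G G' R R'.
Proof.
  unfold obs_rel. intros H HR HR'. destruct (head_of G), (head_of G'); try tauto;
    intuition (subst; eauto 6 using law_eq_trans, law_eq_sym).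
  eapply law_eq_trans; [apply law_eq_par; [apply law_eq_refl | apply law_eq_lift, HR]|].
  eapply law_eq_trans; [eassumption|].
  apply law_eq_par; [apply law_eq_refl | apply law_eq_lift, law_eq_sym, HR'].
Qed.

Lemma obs_rel_par_resid G G' R R' c c' :
  obs_rel G G' R R' -> law_eq c c' -> obs_rel G G' (Par R c) (Par R' c').
Proof.
  unfold obs_rel. intros H Hc. destruct (head_of G), (head_of G'); try tauto;
    intuition (subst; auto using law_eq_par).
  unfold liftP in *; simpl.
  eapply law_eq_trans; [apply law_eq_ac, ac_assoc|].
  eapply law_eq_trans; [|apply law_eq_ac, ac_sym, ac_assoc].
  apply law_eq_par; auto. apply (law_eq_lift c c'), Hc.
Qed.

Lemma ac_prime_par p G R : is_prime p -> is_prime G -> ac p (Par G R) ->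
  ac_head p G /\ primes R = [].
Proof.
  intros Hp HG H. apply ac_primes in H. simpl in H.
  rewrite !primes_prime in H by assumption. simpl in H.
  apply prime_perm_single_inv in H. destruct H as [y [Hy Ha]]. inversion Hy; subst. auto.
Qed.

Lemma ac_extract_prime a G y l1 l2 : is_prime G -> primes a = l1 ++ y :: l2 -> ac_head y G ->
  ac a (Par G (prod (l1 ++ l2))).
Proof.
  intros HG Ha Hy.
  assert (Hl : Forall is_prime (l1 ++ l2)).
  { pose proof (Forall_primes a) as F. rewrite Ha in F.
    apply Forall_app in F as [F1 F2]. inversion F2. apply Forall_app; auto. }
  apply primes_ac. simpl. rewrite Ha, primes_prime, primes_prod by assumption.
  exists (y :: l1 ++ l2). split; [apply Permutation_sym, Permutation_middle|].
  constructor; auto using Forall2_ac_head_refl.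
Qed.

Lemma ac_par_split_prime a b G R : is_prime G -> ac (Par a b) (Par G R) ->
  (exists R1, ac a (Par G R1) /\ ac R (Par R1 b)) \/
  (exists R1, ac b (Par G R1) /\ ac R (Par a R1)).
Proof.
  intros HG H. apply ac_primes, prime_perm_sym in H. simpl in H.
  rewrite (primes_prime G HG) in H.
  apply prime_perm_cons_inv in H. destruct H as [y [k [Hp [Hgy HR]]]].
  assert (Hin : In y (primes a ++ primes b))
    by (apply Permutation_in with (y :: k); [apply Permutation_sym, Hp | left; auto]).
  assert (Hk : forall l1 l2, primes a ++ primes b = l1 ++ y :: l2 ->
             Forall is_prime (l1 ++ l2) -> ac R (prod (l1 ++ l2))).
  { intros l1 l2 E Hl. apply primes_ac. rewrite primes_prod by exact Hl.
    eapply prime_perm_trans; [exact HR|]. apply prime_perm_of_perm; auto.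
    apply Permutation_cons_app_inv with y. rewrite <- E. apply Permutation_sym, Hp. }
  assert (Hprime : forall l1 l2 l, l = l1 ++ y :: l2 -> Forall is_prime l ->
             Forall is_prime (l1 ++ l2)).
  { intros l1 l2 l -> F. apply Forall_app in F as [F1 F2]. inversion F2. apply Forall_app; auto. }
  apply in_app_or in Hin. destruct Hin as [Hin|Hin];
    apply in_split in Hin; destruct Hin as [l1 [l2 Ea]].
  - left. exists (prod (l1 ++ l2)). split.
    + apply ac_extract_prime with y; auto using ac_head_sym.
    + eapply ac_trans; [apply (Hk l1 (l2 ++ primes b))|].
      * rewrite Ea, <- app_assoc. reflexivity.
      * rewrite app_assoc. apply Forall_app; split; [eapply Hprime; eauto using Forall_primes|].
        apply Forall_primes.
      * rewrite app_assoc. eapply ac_trans; [apply ac_prod_app|].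
        apply ac_par; [apply ac_refl | apply ac_sym, ac_prod_primes].
  - right. exists (prod (l1 ++ l2)). split.
    + apply ac_extract_prime with y; auto using ac_head_sym.
    + eapply ac_trans; [apply (Hk (primes a ++ l1) l2)|].
      * rewrite Ea, <- app_assoc. reflexivity.
      * rewrite <- app_assoc. apply Forall_app; split; [apply Forall_primes|].
        eapply Hprime; eauto using Forall_primes.
      * rewrite <- app_assoc. eapply ac_trans; [apply ac_prod_app|].
        apply ac_par; [apply ac_sym, ac_prod_primes | apply ac_refl].
Qed.

Lemma dis_prime_obs_l Z W G R : dis Z W -> is_prime Z -> ac Z (Par G R) -> observable G ->
  exists G' R', ac W (Par G' R') /\ obs_rel G G' R R'.
Proof.
  intros HD HZ HZG HG.
  destruct (ac_prime_par _ _ _ HZ (observable_prime _ HG) HZG) as [Hh HR].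
  cut (exists G' R', ac W (Par G' R') /\ obs_rel G G' Nil R').
  { intros [G' [R' [? ?]]]. exists G', R'. split; auto.
    eapply obs_rel_law_eq_resid; eauto using law_eq_refl. apply law_eq_ac, ac_nil_iff, HR. }
  clear HZG HR. unfold observable in HG.
  inv HD; simpl in HZ; try contradiction; destruct G; simpl in Hh, HG; try contradiction;
    try congruence.
  - subst. exists (PVar i0), Nil. split; [apply ac_sym, ac_nil|]. apply obs_rel_refl.
    + unfold observable; simpl; congruence.
    + apply law_eq_refl.
  - destruct Hh as [-> Hh]. exists (Inp m0 P'), Nil. split; [apply ac_sym, ac_nil|].
    split; auto. apply law_eq_par; [|apply law_eq_refl].
    eapply law_eq_trans; [apply law_eq_ac, ac_sym, Hh | apply law_eq_dis; auto].
  - destruct Hh as [-> Hh]. exists (Out m0 Q'), Nil. split; [apply ac_sym, ac_nil|].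
    repeat split; auto using law_eq_refl.
    eapply law_eq_trans; [apply law_eq_ac, ac_sym, Hh | apply law_eq_dis; auto].
  - destruct G1; simpl in HG; try congruence. destruct Hh as [Hv Hh].
    exists (PApp (PVar i) Q'), Nil. split.
    + eapply ac_trans; [apply ac_papp; [eapply dis_pvar_l; eauto | apply ac_refl]|].
      apply ac_sym, ac_nil.
    + repeat split; auto using law_eq_refl.
      eapply law_eq_trans; [apply law_eq_ac, ac_sym, Hh | apply law_eq_dis; auto].
  - destruct G; simpl in HG; try congruence. destruct Hh as [Hv ->].
    exists (NApp (PVar i) n0), Nil. split.
    + eapply ac_trans; [apply ac_napp; eapply dis_pvar_l; eauto|]. apply ac_sym, ac_nil.
    + repeat split; auto using law_eq_refl.
  - destruct Hh as [-> Hh]. destruct Ps as [|p rest]; [congruence|].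
    exists (Inp m0 p), (prod (map (Inp m0) rest)).
    split; [eapply ac_trans; [eassumption | apply ac_prod_cons]|].
    split; auto. eapply law_eq_trans; [apply law_eq_ac, ac_nil|].
    eapply law_eq_trans; [apply law_eq_ac, ac_sym, Hh|]. auto using Permutation_refl.
Qed.

Lemma ac_not_nil_par G R : is_prime G -> ~ ac Nil (Par G R).
Proof.
  intros HG H. apply ac_sym, ac_nil_iff in H. simpl in H.
  rewrite primes_prime in H by exact HG. discriminate.
Qed.

Lemma ac_par_swap a g r : ac (Par a (Par g r)) (Par g (Par r a)).
Proof. eapply ac_trans; [apply ac_comm | apply ac_sym, ac_assoc]. Qed.

Lemma dis_obs_l Z : forall W G R, dis Z W -> ac Z (Par G R) -> observable G ->
  exists G' R', ac W (Par G' R') /\ obs_rel G G' R R'.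
Proof.
  induction Z; intros W G R HD HZ HG; try exact (dis_prime_obs_l _ _ _ _ HD I HZ HG).
  - destruct (ac_not_nil_par _ _ (observable_prime _ HG) HZ).
  - inversion HD as [| | | |? W1 ? W2 ? HD1 HD2 HW| | | | |]; subst.
    destruct (ac_par_split_prime _ _ _ _ (observable_prime _ HG) HZ)
      as [[R1 [HZ1 HR]]|[R1 [HZ2 HR]]].
    + destruct (IHZ1 _ _ _ HD1 HZ1 HG) as [G' [R1' [HW1 Hrel]]].
      exists G', (Par R1' W2). split.
      * eapply ac_trans; [exact HW|].
        eapply ac_trans; [apply ac_par; [exact HW1 | apply ac_refl] | apply ac_sym, ac_assoc].
      * apply (obs_rel_law_eq_resid _ _ _ _ (Par R1 Z2) (Par R1' W2));
          [apply obs_rel_par_resid, law_eq_dis | apply law_eq_ac | apply law_eq_refl]; assumption.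
    + destruct (IHZ2 _ _ _ HD2 HZ2 HG) as [G' [R1' [HW2 Hrel]]].
      exists G', (Par R1' W1). split.
      * eapply ac_trans; [exact HW|].
        eapply ac_trans; [apply ac_par; [apply ac_refl | exact HW2] | apply ac_par_swap].
      * apply (obs_rel_law_eq_resid _ _ _ _ (Par R1 Z1) (Par R1' W1));
          [apply obs_rel_par_resid, law_eq_dis | apply law_eq_ac | apply law_eq_refl]; try assumption.
        eapply ac_trans; [exact HR | apply ac_comm].
Qed.

Lemma ac_prod_inp_par m Ps G R : is_prime G -> ac (prod (map (Inp m) Ps)) (Par G R) ->
  exists p rest, Permutation Ps (p :: rest) /\ ac_head (Inp m p) G /\
                 ac (prod (map (Inp m) rest)) R.
Proof.
  intros HG H. apply ac_primes, prime_perm_sym in H. simpl in H.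
  rewrite primes_prime, primes_prod_inp in H by exact HG.
  apply prime_perm_cons_inv in H. destruct H as [y [k [Hp [Hgy HR]]]].
  destruct (Permutation_map_cons_inv _ _ _ _ Hp)
    as [p [rest [-> [-> Hrest]]]].
  exists p, rest. repeat split; auto using ac_head_sym.
  apply ac_sym, primes_ac. rewrite primes_prod_inp. exact HR.
Qed.

Lemma dis_prime_obs_r X W G R : dis X W -> is_prime X -> ac W (Par G R) -> observable G ->
  exists G' R', ac X (Par G' R') /\ obs_rel G' G R' R.
Proof.
  intros HD HX HWG HG. pose proof (observable_prime _ HG) as HGp.
  unfold observable in HG.
  inv HD; simpl in HX; try contradiction.
  all: try (apply ac_prime_par in HWG as [Hh HR]; [|exact I|exact HGp];
            apply ac_nil_iff, law_eq_ac, law_eq_sym in HR;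
            destruct G; simpl in Hh, HG; try contradiction; try congruence).
  - subst. exists (PVar i0), Nil. split; [apply ac_sym, ac_nil | split; auto].
  - destruct Hh as [-> Hh]. exists (Inp m0 P), Nil. split; [apply ac_sym, ac_nil|].
    split; auto. apply law_eq_par.
    + eapply law_eq_trans; [apply law_eq_dis; eassumption | apply law_eq_ac, Hh].
    + apply law_eq_lift, HR.
  - destruct Hh as [-> Hh]. exists (Out m0 Q), Nil. split; [apply ac_sym, ac_nil|].
    repeat split; auto.
    eapply law_eq_trans; [apply law_eq_dis; eassumption | apply law_eq_ac, Hh].
  - destruct G1; simpl in HG; try congruence. destruct Hh as [Hv Hh].
    exists (PApp (PVar i) Q), Nil. split.
    + eapply ac_trans; [apply ac_papp; [eapply dis_pvar_r; eauto | apply ac_refl]|].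
      apply ac_sym, ac_nil.
    + repeat split; auto.
      eapply law_eq_trans; [apply law_eq_dis; eassumption | apply law_eq_ac, Hh].
  - destruct G; simpl in HG; try congruence. destruct Hh as [Hv ->].
    exists (NApp (PVar i) n0), Nil. split.
    + eapply ac_trans; [apply ac_napp; eapply dis_pvar_r; eauto|]. apply ac_sym, ac_nil.
    + repeat split; auto.
  - destruct (ac_prod_inp_par m Ps G R HGp (ac_trans _ _ _ (ac_sym _ _ H0) HWG))
      as [p [rest [Hp [Hh HR]]]].
    destruct G; simpl in Hh; try contradiction. destruct Hh as [-> Hh].
    exists (Inp m0 X0), Nil. split; [apply ac_sym, ac_nil|]. split; auto.
    eapply law_eq_trans; [apply law_eq_ac, ac_nil|].
    eapply law_eq_trans; [apply H1, Hp|].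
    apply law_eq_par; [apply law_eq_ac, Hh | apply law_eq_lift, law_eq_ac, HR].
Qed.

Lemma dis_obs_r X : forall W G R, dis X W -> ac W (Par G R) -> observable G ->
  exists G' R', ac X (Par G' R') /\ obs_rel G' G R' R.
Proof.
  induction X; intros W G R HD HW HG; try exact (dis_prime_obs_r _ _ _ _ HD I HW HG).
  - inv HD. destruct (ac_not_nil_par _ _ (observable_prime _ HG) HW).
  - inversion HD as [| | | |? W1 ? W2 ? HD1 HD2 HW12| | | | |]; subst.
    destruct (ac_par_split_prime _ _ _ _ (observable_prime _ HG)
                (ac_trans _ _ _ (ac_sym _ _ HW12) HW)) as [[R1 [HW1 HR]]|[R1 [HW2 HR]]].
    + destruct (IHX1 _ _ _ HD1 HW1 HG) as [G' [R1' [HX1 Hrel]]].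
      exists G', (Par R1' X2). split.
      * eapply ac_trans; [apply ac_par; [exact HX1 | apply ac_refl] | apply ac_sym, ac_assoc].
      * apply (obs_rel_law_eq_resid _ _ _ _ (Par R1' X2) (Par R1 W2));
          [apply obs_rel_par_resid, law_eq_dis | apply law_eq_refl | apply law_eq_ac];
          assumption.
    + destruct (IHX2 _ _ _ HD2 HW2 HG) as [G' [R1' [HX2 Hrel]]].
      exists G', (Par R1' X1). split.
      * eapply ac_trans; [apply ac_par; [apply ac_refl | exact HX2] | apply ac_par_swap].
      * apply (obs_rel_law_eq_resid _ _ _ _ (Par R1' X1) (Par R1 W1));
          [apply obs_rel_par_resid, law_eq_dis | apply law_eq_refl | apply law_eq_ac];
          try assumption.
        eapply ac_trans; [exact HR | apply ac_comm].
Qed.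

(** * Observations up to structural congruence *)

Lemma pstep_observable G G2 : pstep G G2 -> observable G ->
  observable G2 /\ forall R R2, law_eq R R2 -> obs_rel G G2 R R2.
Proof.
  intros HP HG. unfold observable, obs_rel in *.
  destruct HP; simpl in *; try congruence.
  - split; [congruence | auto].
  - split; [congruence|]. intros; split; auto.
    apply law_eq_par; [apply law_eq_scong, pstep_scong | apply law_eq_lift]; auto.
  - split; [congruence|]. intros; repeat split; auto using law_eq_scong, pstep_scong.
  - destruct P; simpl in *; try congruence. inv HP1.
    split; [congruence|]. intros; repeat split; auto using law_eq_scong, pstep_scong.
  - destruct P; simpl in *; try congruence. inv HP. split; [congruence | auto].
  - destruct X; simpl in *; try congruence.
    apply ac_prime_ac_head in H; simpl in H; [contradiction | exact I | exact I].
  - destruct X; simpl in *; try congruence.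
    apply ac_prime_ac_head in H; simpl in H; [contradiction | exact I | exact I].
Qed.

Lemma psteps_par_observable S Z : psteps S Z -> forall G R, S = Par G R -> observable G ->
  exists G2 R2, Z = Par G2 R2 /\ observable G2 /\ obs_rel G G2 R R2.
Proof.
  induction 1 as [S Z HS| S |S M Z _ IH1 _ IH2]; intros G R -> HG.
  - inv HS. destruct (pstep_observable _ _ H1 HG) as [HG2 Hrel].
    exists P', Q'. repeat split; auto using law_eq_scong, pstep_scong.
  - exists G, R. repeat split; auto using obs_rel_refl, law_eq_refl.
  - destruct (IH1 _ _ eq_refl HG) as [G1 [R1 [-> [HG1 Hr1]]]].
    destruct (IH2 _ _ eq_refl HG1) as [G2 [R2 [-> [HG2 Hr2]]]].
    exists G2, R2. repeat split; eauto using obs_rel_trans.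
Qed.

Lemma psteps_abs b S Z : psteps S Z -> forall A, S = abs b A ->
  exists A2, Z = abs b A2 /\ scong A A2.
Proof.
  induction 1 as [S Z HS| S |S M Z _ IH1 _ IH2]; intros A ->.
  - destruct b; inv HS; eauto using pstep_scong.
  - exists A. split; auto using sc_refl.
  - destruct (IH1 _ eq_refl) as [A1 [-> ?]]. destruct (IH2 _ eq_refl) as [A2 [-> ?]].
    exists A2. split; eauto using sc_trans.
Qed.

Lemma dis_psteps_l X Z : psteps X Z -> forall X' Y, ac X X' -> dis X' Y ->
  exists Z' W, ac Z Z' /\ red Y W /\ dis Z' W.
Proof.
  induction 1 as [X Z HS| X |X M Z _ IH1 _ IH2]; intros X' Y HA HD.
  - destruct (ac_pstep_sim _ _ _ HA HS) as [X1 [HP HA1]].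
    destruct (dis_pstep_l X' _ _ HD HP) as [X2 [Y1 [HA2 [Hr Hd]]]].
    exists X2, Y1. repeat split; eauto using ac_trans.
  - exists X', Y. repeat split; auto using rt_refl.
  - destruct (IH1 _ _ HA HD) as [M' [W1 [HM [Hr1 Hd1]]]].
    destruct (IH2 _ _ HM Hd1) as [Z' [W [HZ [Hr2 Hd2]]]].
    exists Z', W. repeat split; eauto using rt_trans.
Qed.

Lemma dis_psteps_r Y Z : psteps Y Z -> forall X, dis X Y -> exists V, red X V /\ dis V Z.
Proof.
  induction 1 as [Y Z HS| Y |Y M Z _ IH1 _ IH2]; intros X HD.
  - exact (dis_pstep_r X _ _ HD HS).
  - exists X. split; auto using rt_refl.
  - destruct (IH1 _ HD) as [V1 [Hr1 Hd1]]. destruct (IH2 _ Hd1) as [V [Hr2 Hd2]].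
    exists V. split; eauto using rt_trans.
Qed.

Lemma dis_scong_obs_l X Y G R : dis X Y -> scong X (Par G R) -> observable G ->
  exists G' R', scong Y (Par G' R') /\ obs_rel G G' R R'.
Proof.
  intros HD HS HG. destruct (scong_joinable _ _ HS) as [Z1 [Z2 [H1 [H2 H3]]]].
  destruct (psteps_par_observable _ _ H2 _ _ eq_refl HG) as [G2 [R2 [-> [HG2 Hr2]]]].
  destruct (dis_psteps_l _ _ H1 X Y (ac_refl _) HD) as [Z' [W [Ha [Hr Hd]]]].
  destruct (dis_obs_l _ _ G2 R2 Hd (ac_trans _ _ _ (ac_sym _ _ Ha) H3) HG2)
    as [G' [R' [Hw Hrel]]].
  exists G', R'. split.
  - eapply sc_trans; [apply red_scong; eauto | apply ac_scong; auto].
  - eauto using obs_rel_trans.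
Qed.

Lemma dis_scong_obs_r X Y G R : dis X Y -> scong Y (Par G R) -> observable G ->
  exists G' R', scong X (Par G' R') /\ obs_rel G G' R R'.
Proof.
  intros HD HS HG. destruct (scong_joinable _ _ HS) as [Z1 [Z2 [H1 [H2 H3]]]].
  destruct (psteps_par_observable _ _ H2 _ _ eq_refl HG) as [G2 [R2 [-> [HG2 Hr2]]]].
  destruct (dis_psteps_r _ _ H1 X HD) as [V [Hr Hd]].
  destruct (dis_obs_r _ _ G2 R2 Hd H3 HG2) as [G' [R' [Hw Hrel]]].
  exists G', R'. split.
  - eapply sc_trans; [apply red_scong; eauto | apply ac_scong; auto].
  - eauto using obs_rel_trans, obs_rel_sym.
Qed.

Lemma dis_scong_abs_l b X Y A : dis X Y -> scong X (abs b A) ->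
  exists B, scong Y (abs b B) /\ law_eq A B.
Proof.
  intros HD HS. destruct (scong_joinable _ _ HS) as [Z1 [Z2 [H1 [H2 H3]]]].
  destruct (psteps_abs b _ _ H2 _ eq_refl) as [A2 [-> HA2]].
  destruct (dis_psteps_l _ _ H1 X Y (ac_refl _) HD) as [Z' [W [Ha [Hr Hd]]]].
  destruct (dis_abs_l b _ _ A2 Hd (ac_trans _ _ _ (ac_sym _ _ Ha) H3))
    as [B0 [C0 [_ [HB0 [HD0 HW]]]]].
  exists C0. split.
  - eapply sc_trans; [apply red_scong; eauto | apply ac_scong; auto].
  - eapply law_eq_trans; [apply law_eq_scong, HA2|].
    eapply law_eq_trans; [apply law_eq_ac, ac_sym, HB0 | apply law_eq_dis, HD0].
Qed.

Lemma dis_scong_abs_r b X Y A : dis X Y -> scong Y (abs b A) ->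
  exists B, scong X (abs b B) /\ law_eq A B.
Proof.
  intros HD HS. destruct (scong_joinable _ _ HS) as [Z1 [Z2 [H1 [H2 H3]]]].
  destruct (psteps_abs b _ _ H2 _ eq_refl) as [A2 [-> HA2]].
  destruct (dis_psteps_r _ _ H1 X HD) as [V [Hr Hd]].
  destruct (dis_abs_r b _ _ A2 Hd H3) as [B0 [C0 [_ [HV [HD0 HC0]]]]].
  exists B0. split.
  - eapply sc_trans; [apply red_scong; eauto | apply ac_scong; auto].
  - apply law_eq_sym. eapply law_eq_trans; [apply law_eq_dis, HD0|].
    eapply law_eq_trans; [apply law_eq_ac, HC0 | apply law_eq_scong, sc_sym, HA2].
Qed.

(** * The bisimulation *)

Definition io_form (P : term) (l : label) (P' : term) : Prop :=
  match l with
  | LInp m => exists P1 R, scong P (Par (Inp m P1) R) /\ scong P' (Par P1 (liftP R))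
  | LOut m A => exists R, scong P (Par (Out m A) R) /\ scong P' R
  | LTau => True
  end.

Lemma ac_par_left_comm P Q R : ac (Par P (Par Q R)) (Par Q (Par P R)).
Proof.
  eapply ac_trans; [apply ac_assoc|]. eapply ac_trans; [apply ac_par; [apply ac_comm | apply ac_refl]|].
  apply ac_sym, ac_assoc.
Qed.

Lemma scong_par_ac P P' Q R : scong P P' -> ac (Par P' Q) R -> scong (Par P Q) R.
Proof. intros H1 H2. eapply sc_trans; [apply sc_par; [exact H1 | apply sc_refl] | apply ac_scong, H2]. Qed.

Lemma scong_par_ac_r P Q Q' R : scong Q Q' -> ac (Par P Q') R -> scong (Par P Q) R.
Proof. intros H1 H2. eapply sc_trans; [apply sc_par; [apply sc_refl | exact H1] | apply ac_scong, H2]. Qed.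

Lemma trans_io_form P l P' : trans P l P' -> io_form P l P'.
Proof.
  induction 1; simpl in *; auto.
  - exists P, Nil. split; apply sc_sym, sc_par_nil.
  - exists Nil. split; [apply sc_sym, sc_par_nil | apply sc_refl].
  - destruct IHtrans as [R [H1 H2]]. exists (Par R Q).
    split; [eapply scong_par_ac; [exact H1 | apply ac_sym, ac_assoc] | apply sc_par; auto using sc_refl].
  - destruct IHtrans as [P1 [R [H1 H2]]]. exists P1, (Par R Q).
    split; [eapply scong_par_ac; [exact H1 | apply ac_sym, ac_assoc]|].
    eapply scong_par_ac; [exact H2 | apply ac_sym, ac_assoc].
  - destruct IHtrans as [R [H1 H2]]. exists (Par P R).
    split; [eapply scong_par_ac_r; [exact H1 | apply ac_par_left_comm] | apply sc_par; auto using sc_refl].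
  - destruct IHtrans as [P1 [R [H1 H2]]]. exists P1, (Par P R).
    split; [eapply scong_par_ac_r; [exact H1 | apply ac_par_left_comm]|].
    eapply scong_par_ac_r; [exact H2 | apply ac_par_left_comm].
  - destruct l; simpl in *; auto.
    + destruct IHtrans as [R [Ha Hb]]. exists R. eauto using sc_trans, sc_sym.
    + destruct IHtrans as [P1 [R [Ha Hb]]]. exists P1, R. eauto using sc_trans, sc_sym.
Qed.

Lemma trans_inp_intro P m P1 R P' : scong P (Par (Inp m P1) R) ->
  scong P' (Par P1 (liftP R)) -> trans P (LInp m) P'.
Proof.
  intros H1 H2. eapply tr_scong; [exact H1 | apply tr_parl_inp, tr_inp | apply sc_sym, H2].
Qed.

Lemma trans_out_intro P m A R : scong P (Par (Out m A) R) -> trans P (LOut m A) R.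
Proof.
  intros H. eapply tr_scong; [exact H | apply tr_parl_out, tr_out|].
  eapply sc_trans; [apply sc_par_comm | apply sc_par_nil].
Qed.

Definition obs_sim (P Q : term) : Prop :=
  (forall b A, scong P (abs b A) -> exists B, scong Q (abs b B) /\ law_eq A B) /\
  (forall G R, scong P (Par G R) -> observable G ->
     exists G' R', scong Q (Par G' R') /\ obs_rel G G' R R').

Lemma scong_obs_sim P Q : scong P Q -> obs_sim P Q.
Proof.
  intros H. split.
  - intros b A HA. exists A. eauto using sc_trans, sc_sym, law_eq_refl.
  - intros G R HG Hobs. exists G, R. eauto using sc_trans, sc_sym, obs_rel_refl, law_eq_refl.
Qed.

Lemma obs_sim_trans P Q S : obs_sim P Q -> obs_sim Q S -> obs_sim P S.
Proof.
  intros [A1 O1] [A2 O2]. split.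
  - intros b A HA. destruct (A1 _ _ HA) as [B [HB HAB]]. destruct (A2 _ _ HB) as [C [HC HBC]].
    eauto using law_eq_trans.
  - intros G R HG Hobs. destruct (O1 _ _ HG Hobs) as [G1 [R1 [H1 Hr1]]].
    destruct (O2 _ _ H1 (obs_rel_observable _ _ _ _ (obs_rel_sym _ _ _ _ Hr1)))
      as [G2 [R2 [H2 Hr2]]].
    eauto using obs_rel_trans.
Qed.

Lemma law_eq_obs_sim P Q : law_eq P Q -> obs_sim P Q /\ obs_sim Q P.
Proof.
  induction 1 as [P Q H|P Q H|P Q _ [? ?]|P Q R _ [? ?] _ [? ?]].
  - auto using scong_obs_sim, sc_sym.
  - split; split; intros.
    + eapply dis_scong_abs_l; eauto.
    + eapply dis_scong_obs_l; eauto.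
    + eapply dis_scong_abs_r; eauto.
    + eapply dis_scong_obs_r; eauto.
  - auto.
  - eauto using obs_sim_trans.
Qed.

Lemma obs_rel_inv_out m A G' R R' : obs_rel (Out m A) G' R R' ->
  exists A', G' = Out m A' /\ law_eq A A' /\ law_eq R R'.
Proof.
  unfold obs_rel; simpl. destruct G' as [| | | | | |g ?| |g ?]; try destruct g; simpl; try tauto.
  intros [-> ?]. eauto.
Qed.

Lemma obs_rel_inv_inp m P G' R R' : obs_rel (Inp m P) G' R R' ->
  exists P', G' = Inp m P' /\ law_eq (Par P (liftP R)) (Par P' (liftP R')).
Proof.
  unfold obs_rel; simpl. destruct G' as [| | | | | |g ?| |g ?]; try destruct g; simpl; try tauto.
  intros [-> ?]. eauto.
Qed.

Lemma obs_rel_inv_var i G' R R' : obs_rel (PVar i) G' R R' -> G' = PVar i /\ law_eq R R'.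
Proof.
  unfold obs_rel; simpl. destruct G' as [| | | | | |g ?| |g ?]; try destruct g; simpl; try tauto.
  intros [-> ?]. auto.
Qed.

Lemma obs_rel_inv_app i A G' R R' : obs_rel (PApp (PVar i) A) G' R R' ->
  exists A', G' = PApp (PVar i) A' /\ law_eq A A' /\ law_eq R R'.
Proof.
  unfold obs_rel; simpl. destruct G' as [| | | | | |g ?| |g ?]; try destruct g; simpl; try tauto.
  intros [-> ?]. eauto.
Qed.

Lemma obs_rel_inv_napp i d G' R R' : obs_rel (NApp (PVar i) d) G' R R' ->
  G' = NApp (PVar i) d /\ law_eq R R'.
Proof.
  unfold obs_rel; simpl. destruct G' as [| | | | | |g ?| |g ?]; try destruct g; simpl; try tauto.
  intros [-> [-> ?]]. auto.
Qed.

Lemma law_eq_bisimulation : is_bisimulation law_eq.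
Proof.
  intros P Q H. destruct (law_eq_obs_sim _ _ H) as [[OA OG] [OA' _]].
  split.
  { intros [HP HN]; split; intros B HB.
    - destruct (OA' true _ HB) as [A [HA _]]. exact (HP A HA).
    - destruct (OA' false _ HB) as [A [HA _]]. exact (HN A HA). }
  repeat split.
  - exact (OA true).
  - exact (OA false).
  - intros m A P' Ht. destruct (trans_io_form _ _ _ Ht) as [R [H1 H2]].
    destruct (OG _ _ H1 ltac:(discriminate)) as [G' [R' [Hs Hr]]].
    destruct (obs_rel_inv_out _ _ _ _ _ Hr) as [A' [-> [HA HR]]].
    exists A', R'. repeat split; eauto using trans_out_intro, law_eq_trans, law_eq_scong.
  - intros m P' Ht. destruct (trans_io_form _ _ _ Ht) as [P1 [R [H1 H2]]].
    destruct (OG _ _ H1 ltac:(discriminate)) as [G' [R' [Hs Hr]]].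
    destruct (obs_rel_inv_inp _ _ _ _ _ Hr) as [P1' [-> HE]].
    exists (Par P1' (liftP R')).
    split; [eapply trans_inp_intro; eauto using sc_refl | eauto using law_eq_trans, law_eq_scong].
  - intros i P' H1. destruct (OG _ _ H1 ltac:(discriminate)) as [G' [R' [Hs Hr]]].
    destruct (obs_rel_inv_var _ _ _ _ Hr) as [-> HR]. eauto.
  - intros i A P' H1. destruct (OG _ _ H1 ltac:(discriminate)) as [G' [R' [Hs Hr]]].
    destruct (obs_rel_inv_app _ _ _ _ _ Hr) as [A' [-> [HA HR]]]. eauto.
  - intros i d P' H1. destruct (OG _ _ H1 ltac:(discriminate)) as [G' [R' [Hs Hr]]].
    destruct (obs_rel_inv_napp _ _ _ _ _ Hr) as [-> HR]. eauto.
Qed.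

Lemma dis_of_law_dis m P n :
  dis (Inp m (Par P (prod (repeat (liftP (Inp m P)) n)))) (prod (repeat (Inp m P) (S n))).
Proof.
  apply dis_law with (repeat P (S n)); [discriminate | rewrite map_repeat; apply ac_refl|].
  intros p rest Hp. apply Permutation_sym, Permutation_repeat in Hp.
  symmetry in Hp. apply repeat_eq_cons in Hp as [<- <-].
  rewrite map_repeat. unfold liftP. rewrite ren_prod, map_repeat. apply law_eq_refl.
Qed.

Lemma ctx_step_law_eq P Q : ctx_step P Q -> law_eq P Q.
Proof.
  induction 1 as [P Q []| | | | | | | | |].
  - apply law_eq_dis, dis_of_law_dis.
  - apply law_eq_scong, sc_beta_p.
  - apply law_eq_scong, sc_beta_n.
  - apply (law_eq_congr1 (Inp m)); auto using sc_inp, dis_inp.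
  - apply (law_eq_congr1 (Out m)); auto using sc_out, dis_out.
  - apply (law_eq_congr1 (fun x => Par x Q)); auto.
    + intros; apply sc_par; auto using sc_refl.
    + intros; eapply dis_par; eauto using dis_refl, ac_refl.
  - apply (law_eq_congr1 (fun x => Par P x)); auto.
    + intros; apply sc_par; auto using sc_refl.
    + intros; eapply dis_par; eauto using dis_refl, ac_refl.
  - apply (law_eq_congr1 PAbs); auto using sc_pabs, dis_pabs.
  - apply (law_eq_congr1 (fun x => PApp x Q)); auto.
    + intros; apply sc_papp; auto using sc_refl.
    + intros; apply dis_papp; auto using dis_refl.
  - apply (law_eq_congr1 (fun x => PApp P x)); auto.
    + intros; apply sc_papp; auto using sc_refl.
    + intros; apply dis_papp; auto using dis_refl.
  - apply (law_eq_congr1 NAbs); auto using sc_nabs, dis_nabs.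
  - apply (law_eq_congr1 (fun x => NApp x n)); auto using sc_napp, dis_napp.
Qed.

Lemma rw_law_eq P Q : rw P Q -> law_eq P Q.
Proof.
  intros [P' [Q' [H1 [H2 H3]]]].
  eapply law_eq_trans; [apply law_eq_scong, sc_sym, H1|].
  eapply law_eq_trans; [apply ctx_step_law_eq, H3 | apply law_eq_scong, H2].
Qed.

Lemma law_eq_bisim P Q : law_eq P Q -> bisim P Q.
Proof. intros H. exists law_eq. auto using law_eq_sym, law_eq_bisimulation. Qed.

Theorem mainTheorem16 :
  (forall P Q : term, rw P Q -> bisim P Q) /\
  (forall P N : term, is_nf_of P N -> bisim P N).
Proof.
  split.
  - intros P Q H. apply law_eq_bisim, rw_law_eq, H.
  - intros P N [H _]. apply law_eq_bisim.
    induction H; eauto using rw_law_eq, law_eq_refl, law_eq_trans.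
Qed.
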